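(* Suppose $\widehat Z^\natural$ satisfies the average case incoherence condition with parameter $\mu_0$, $\Omega$ follows the Bernoulli model with parameter $p\in(0,1]$, and $\widehat Z\in\mathbb C^{dn_1\times dn_2}$ is a fixed block diagonal matrix. Then with high probability $$\Big\|\Big(\tfrac1p\mathcal P_{\widehat T}\widehat{\mathcal G}\mathcal P_\Omega\widehat{\mathcal G}^*-\mathcal P_{\widehat T}\widehat{\mathcal G}\widehat{\mathcal G}^*\Big)\widehat Z\Big\|_{\widehat{\mathcal G},\infty}\le C\,\frac{\mu_0 r}{n}\Big(\sqrt{\tfrac{\log(dn)}{p}}\|\widehat Z\|_{\widehat{\mathcal G},F}+\tfrac{\log(dn)}{p}\|\widehat Z\|_{\widehat{\mathcal G},\infty}\Big)$$ for an absolute constant $C>0$.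
   Context: Let $d,n\ge1$ with $n$ odd and $n_1=n_2=(n+1)/2$. For $a\in[n]$, $w_a=\#\{(j,k)\in[n_1]\times[n_2]:j+k=a+1\}$, $G_a=w_a^{-1/2}\sum_{j+k=a+1}e_je_k^{\mathsf T}$, $\mathcal G(x)=\sum_ax_aG_a$. $F$ is the $d\times d$ unitary DFT matrix. $\widehat{\mathcal G}$ maps $X\in\mathbb C^{d\times n}$ to the block diagonal matrix whose $i$-th block is $\mathcal G$ of the $i$-th row of $FX$; $\widehat{\mathcal G}^*$ is its adjoint w.r.t. $\langle A,B\rangle=\mathrm{tr}(AB^{\mathsf H})$. $\widehat G_{j,k}=\widehat{\mathcal G}(e_je_k^{\mathsf T})=\mathrm{diag}(F_{1j}G_k,\dots,F_{dj}G_k)$. $\|\widehat Z\|_{\widehat{\mathcal G},F}=\big(\sum_{(j,k)}\frac1{dw_k}|\langle\widehat Z,\widehat G_{j,k}\rangle|^2\big)^{1/2}$, $\|\widehat Z\|_{\widehat{\mathcal G},\infty}=\max_{(j,k)}\frac1{\sqrt{dw_k}}|\langle\widehat Z,\widehat G_{j,k}\rangle|$. $\mathcal P_\Omega$ keeps entries in $\Omega\subset[d]\times[n]$ and zeroes the rest; Bernoulli model: each index in $\Omega$ independently with probability $p$. $\widehat Z^\natural=\mathrm{diag}(\widehat Z^\natural_a)$ with each block of rank $r$ and compact SVD $\widehat U_a\widehat\Sigma_a\widehat V_a^{\mathsf H}$; $\mathcal P_{\widehat T}$ acts blockwise by $W_a\mapsto\widehat U_a\widehat U_a^{\mathsf H}W_a+W_a\widehat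 V_a\widehat V_a^{\mathsf H}-\widehat U_a\widehat U_a^{\mathsf H}W_a\widehat V_a\widehat V_a^{\mathsf H}$. Average case incoherence with parameter $\mu_0$: $\max_i\frac1d\sum_a\|e_i^{\mathsf T}\widehat U_a\|_2^2\le\mu_0r/n$ and $\max_j\frac1d\sum_a\|e_j^{\mathsf T}\widehat V_a\|_2^2\le\mu_0r/n$. ''With high probability'': probability at least $1-c_1(dn)^{-c_2}$ for absolute constants $c_1,c_2>0$. *)

From Stdlib Require Import Reals List Bool Arith.
Open Scope R_scope.

Record C := mkC { Cre : R; Cim : R }.
Definition C0 : C := mkC 0 0.
Definition CR (x : R) : C := mkC x 0.
Definition Cadd (x y : C) : C := mkC (Cre x + Cre y) (Cim x + Cim y).
Definition Csub (x y : C) : C := mkC (Cre x - Cre y) (Cim x - Cim y).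
Definition Cmul (x y : C) : C :=
  mkC (Cre x * Cre y - Cim x * Cim y) (Cre x * Cim y + Cim x * Cre y).
Definition Cconj (x : C) : C := mkC (Cre x) (- Cim x).
Definition Cscale (a : R) (x : C) : C := mkC (a * Cre x) (a * Cim x).
Definition Cmod (x : C) : R := sqrt (Cre x ^ 2 + Cim x ^ 2).

Fixpoint sumR (n : nat) (f : nat -> R) : R :=
  match n with O => 0 | S k => sumR k f + f k end.
Fixpoint sumC (n : nat) (f : nat -> C) : C :=
  match n with O => C0 | S k => Cadd (sumC k f) (f k) end.
(* maximum of f 0, ..., f (n-1); only used on nonnegative values (base 0) *)
Fixpoint maxR (n : nat) (f : nat -> R) : R :=
  match n with O => 0 | S k => Rmax (maxR k f) (f k) end.

(* ---------- matrices (0-based indices; entries outside range unused) ---------- *)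
Definition Mat := nat -> nat -> C.
(* block diagonal matrix: family of blocks indexed by i in {0..d-1} *)
Definition Blocks := nat -> Mat.

Definition mmul (k : nat) (A B : Mat) : Mat :=
  fun i j => sumC k (fun t => Cmul (A i t) (B t j)).
Definition ctrans (A : Mat) : Mat := fun i j => Cconj (A j i).
Definition madd (A B : Mat) : Mat := fun i j => Cadd (A i j) (B i j).
Definition msub (A B : Mat) : Mat := fun i j => Csub (A i j) (B i j).
Definition mscale (a : R) (A : Mat) : Mat := fun i j => Cscale a (A i j).
Definition idmat : Mat := fun i j => if Nat.eqb i j then CR 1 else C0.

(* ---------- Hankel structure, n odd, n1 = n2 = (n+1)/2 ---------- *)
Definition hsize (n : nat) : nat := Nat.div (n + 1) 2.

Definition hw (n a : nat) : R :=
  sumR (hsize n) (fun j => sumR (hsize n) (fun k => if Nat.eqb (j + k)%nat a then 1 else 0)).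

Definition Gmat (n a : nat) : Mat := fun j k =>
  if (Nat.ltb j (hsize n) && Nat.ltb k (hsize n) && Nat.eqb (j + k)%nat a)%bool
  then CR (/ sqrt (hw n a)) else C0.

Definition Hank (n : nat) (x : nat -> C) : Mat :=
  fun j k => sumC n (fun a => Cmul (x a) (Gmat n a j k)).

Definition Fdft (d i l : nat) : C :=
  Cscale (/ sqrt (INR d))
    (mkC (cos (- 2 * PI * INR (i * l)%nat / INR d)) (sin (- 2 * PI * INR (i * l)%nat / INR d))).

(* Ghat X : i-th block is G of the i-th row of F X ; X is d x n *)
Definition Ghat (d n : nat) (X : Mat) : Blocks :=
  fun i => Hank n (fun a => sumC d (fun l => Cmul (Fdft d i l) (X l a))).

Definition binner (d n : nat) (A B : Blocks) : C :=
  sumC d (fun i => sumC (hsize n) (fun j => sumC (hsize n)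
    (fun k => Cmul (A i j k) (Cconj (B i j k))))).

Definition Eunit (l a : nat) : Mat :=
  fun l' a' => if (Nat.eqb l' l && Nat.eqb a' a)%bool then CR 1 else C0.

Definition GhatE (d n l a : nat) : Blocks := Ghat d n (Eunit l a).

(* adjoint of Ghat w.r.t. <.,.>: (Ghat^adj W)_{l a} = <W, Ghat_{l,a}> *)
Definition Gstar (d n : nat) (W : Blocks) : Mat :=
  fun l a => binner d n W (GhatE d n l a).

Definition normGF (d n : nat) (Z : Blocks) : R :=
  sqrt (sumR d (fun l => sumR n (fun a =>
    / (INR d * hw n a) * (Cmod (binner d n Z (GhatE d n l a))) ^ 2))).

Definition normGinf (d n : nat) (Z : Blocks) : R :=
  maxR d (fun l => maxR n (fun a =>
    / sqrt (INR d * hw n a) * Cmod (binner d n Z (GhatE d n l a)))).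

(* Omega is encoded as a bit list of length d*n; (l,a) is in Omega iff bit l*n+a is true *)
Definition POmega (n : nat) (om : list bool) (X : Mat) : Mat :=
  fun l a => if nth (l * n + a)%nat om false then X l a else C0.

Fixpoint allbits (N : nat) : list (list bool) :=
  match N with
  | O => nil :: nil
  | S k => map (cons true) (allbits k) ++ map (cons false) (allbits k)
  end.

Definition bern_weight (p : R) (om : list bool) : R :=
  fold_right (fun (b : bool) (acc : R) => (if b then p else 1 - p) * acc) 1 om.

Definition bern_expect (N : nat) (p : R) (f : list bool -> R) : R :=
  fold_right (fun (om : list bool) (acc : R) => bern_weight p om * f om + acc) 0 (allbits N).

Definition PT (m r : nat) (U V : Blocks) (W : Blocks) : Blocks :=
  fun i =>
    let PU := mmul r (U i) (ctrans (U i)) in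
    let PV := mmul r (V i) (ctrans (V i)) in
    msub (madd (mmul m PU (W i)) (mmul m (W i) PV)) (mmul m (mmul m PU (W i)) PV).

Definition bsub (A B : Blocks) : Blocks := fun i => msub (A i) (B i).

Definition lemma_op (d n r : nat) (U V : Blocks) (p : R) (om : list bool) (Z : Blocks) : Blocks :=
  bsub (PT (hsize n) r U V (fun i => mscale (/ p) (Ghat d n (POmega n om (Gstar d n Z)) i)))
       (PT (hsize n) r U V (Ghat d n (Gstar d n Z))).

Definition compact_svd (d n r : nat) (Znat U Sig V : Blocks) : Prop :=
  forall i, (i < d)%nat ->
    (forall j k, (j < hsize n)%nat -> (k < hsize n)%nat ->
       Znat i j k = mmul r (mmul r (U i) (Sig i)) (ctrans (V i)) j k) /\
    (forall j k, (j < r)%nat -> (k < r)%nat ->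
       mmul (hsize n) (ctrans (U i)) (U i) j k = idmat j k) /\
    (forall j k, (j < r)%nat -> (k < r)%nat ->
       mmul (hsize n) (ctrans (V i)) (V i) j k = idmat j k) /\
    (forall j k, (j < r)%nat -> (k < r)%nat -> j <> k -> Sig i j k = C0) /\
    (forall j, (j < r)%nat -> Cim (Sig i j j) = 0 /\ 0 < Cre (Sig i j j)).

Definition avg_incoherent (d n r : nat) (mu0 : R) (U V : Blocks) : Prop :=
  (forall j, (j < hsize n)%nat ->
     / INR d * sumR d (fun i => sumR r (fun t => Cmod (U i j t) ^ 2)) <= mu0 * INR r / INR n) /\
  (forall j, (j < hsize n)%nat ->
     / INR d * sumR d (fun i => sumR r (fun t => Cmod (V i j t) ^ 2)) <= mu0 * INR r / INR n).

(* Fix an output entry (l,a) and write Y := Ghat^* Z, c_{jk} := <P_T Ghat_{j,k}, Ghat_{l,a}>.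
   By linearity that entry of the operator applied to Z is sum_{j,k} (delta_{jk}/p - 1) Y_{jk} c_{jk},
   a sum of independent centred terms.  Averaging the row norms of the singular vectors over the
   d blocks, average incoherence gives |c_{jk}| <= 3 (mu0 r/n) sqrt (w_a / w_k); after the
   normalisation 1/sqrt (d w_a) each term is at most 3 (mu0 r/n) ||Z||_inf and their squares add
   up to at most 9 (mu0 r/n)^2 ||Z||_F^2.  Bernstein's inequality (from the moment generating
   function of a centred Bernoulli variable), applied to the real and imaginary parts with both
   signs, bounds the probability that the entry exceeds
   48 (mu0 r/n) (sqrt (log(dn)/p) ||Z||_F + log(dn)/p ||Z||_inf) by 4 (dn)^-2, and a union bound
   over the dn entries gives the failure probability 4 (dn)^-1. *)

From Pilot Require Import Defs.
From Stdlib Require Import Reals List Arith.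
From Stdlib Require Import Lra Lia Psatz Ring Field FunctionalExtensionality.
(* [Reals] exports the binomial coefficient [C]; re-import [Defs] so that [C] is the complex type. *)
Import Defs.
Open Scope R_scope.

(** * Complex numbers *)

Definition Copp (x : C) : C := mkC (- Cre x) (- Cim x).

Lemma C_ext x y : Cre x = Cre y -> Cim x = Cim y -> x = y.
Proof. destruct x, y; simpl; intros -> ->; reflexivity. Qed.

Lemma C_ring_theory : ring_theory C0 (CR 1) Cadd Cmul Csub Copp (@eq C).
Proof.
  constructor; intros;
  repeat match goal with x : C |- _ => destruct x end;
  apply C_ext; unfold Cadd, Cmul, Csub, Copp, C0, CR; simpl; ring.
Qed.
Add Ring C_ring : C_ring_theory.

Lemma Cconj_mul x y : Cconj (Cmul x y) = Cmul (Cconj x) (Cconj y).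
Proof. destruct x, y; apply C_ext; simpl; ring. Qed.

Lemma Cconj_add x y : Cconj (Cadd x y) = Cadd (Cconj x) (Cconj y).
Proof. destruct x, y; apply C_ext; simpl; ring. Qed.

Lemma Cconj_involutive x : Cconj (Cconj x) = x.
Proof. destruct x; apply C_ext; simpl; ring. Qed.

Lemma Cmod_nonneg x : 0 <= Cmod x.
Proof. apply sqrt_pos. Qed.

Lemma Cmod_mul x y : Cmod (Cmul x y) = Cmod x * Cmod y.
Proof.
  destruct x as [a b], y as [c e]; unfold Cmod, Cmul; simpl.
  rewrite <- sqrt_mult by nra. f_equal. ring.
Qed.

Lemma Cmod_conj x : Cmod (Cconj x) = Cmod x.
Proof. destruct x; unfold Cmod; simpl; f_equal; ring. Qed.

Lemma Cmod_C0 : Cmod C0 = 0.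
Proof. unfold Cmod; cbn [Cre Cim C0]. replace (0 ^ 2 + 0 ^ 2) with 0 by ring. apply sqrt_0. Qed.

Lemma Cmod_CR a : Cmod (CR a) = Rabs a.
Proof.
  unfold Cmod; cbn [Cre Cim CR]. rewrite <- sqrt_Rsqr_abs. f_equal. unfold Rsqr; ring.
Qed.

Lemma Cmod_scale a x : 0 <= a -> Cmod (Cscale a x) = a * Cmod x.
Proof.
  intros Ha. destruct x as [u v]; unfold Cmod, Cscale; cbn [Cre Cim].
  replace ((a * u) ^ 2 + (a * v) ^ 2) with (a ^ 2 * (u ^ 2 + v ^ 2)) by ring.
  rewrite sqrt_mult_alt by nra. rewrite sqrt_pow2 by lra. reflexivity.
Qed.

Lemma Cmod_triangle x y : Cmod (Cadd x y) <= Cmod x + Cmod y.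
Proof.
  destruct x as [a b], y as [c e]; unfold Cmod, Cadd; cbn [Cre Cim].
  set (X := sqrt (a ^ 2 + b ^ 2)). set (Y := sqrt (c ^ 2 + e ^ 2)).
  assert (HX : 0 <= X) by apply sqrt_pos. assert (HY : 0 <= Y) by apply sqrt_pos.
  assert (HX2 : X * X = a ^ 2 + b ^ 2) by (apply sqrt_sqrt; nra).
  assert (HY2 : Y * Y = c ^ 2 + e ^ 2) by (apply sqrt_sqrt; nra).
  assert (Hcross : a * c + b * e <= X * Y).
  { assert ((a * c + b * e) ^ 2 <= (X * Y) ^ 2).
    { replace ((X * Y) ^ 2) with ((X * X) * (Y * Y)) by ring. rewrite HX2, HY2.
      pose proof (pow2_ge_0 (a * e - b * c)). nra. }
    assert (0 <= X * Y) by nra. nra. }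
  rewrite <- (sqrt_pow2 (X + Y)) by lra. apply sqrt_le_1_alt. nra.
Qed.

Lemma Cmod_sub_le x y : Cmod (Csub x y) <= Cmod x + Cmod y.
Proof.
  change (Csub x y) with (Cadd x (Copp y)).
  replace (Cmod y) with (Cmod (Copp y)) by (unfold Cmod; simpl; f_equal; ring).
  apply Cmod_triangle.
Qed.

Lemma Rabs_Cre_le x : Rabs (Cre x) <= Cmod x.
Proof.
  destruct x as [a b]; unfold Cmod; cbn [Cre Cim].
  rewrite <- (sqrt_Rsqr_abs a). apply sqrt_le_1_alt. unfold Rsqr. nra.
Qed.

Lemma Rabs_Cim_le x : Rabs (Cim x) <= Cmod x.
Proof.
  destruct x as [a b]; unfold Cmod; cbn [Cre Cim].
  rewrite <- (sqrt_Rsqr_abs b). apply sqrt_le_1_alt. unfold Rsqr. nra.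
Qed.

Lemma Cmod_le_Rabs_re_im x : Cmod x <= Rabs (Cre x) + Rabs (Cim x).
Proof.
  destruct x as [a b]; unfold Cmod; cbn [Cre Cim].
  pose proof (Rabs_pos a); pose proof (Rabs_pos b).
  rewrite <- (sqrt_pow2 (Rabs a + Rabs b)) by lra.
  apply sqrt_le_1_alt. rewrite <- (pow2_abs a), <- (pow2_abs b). nra.
Qed.

Lemma Cmul_conj_r x : Cmul x (Cconj x) = CR (Cmod x ^ 2).
Proof.
  unfold Cmod. rewrite pow2_sqrt by nra. destruct x; apply C_ext; simpl; ring.
Qed.

(** * Finite sums *)

Lemma sumR_ext n f g : (forall k, (k < n)%nat -> f k = g k) -> sumR n f = sumR n g.
Proof.
  induction n as [|n IH]; simpl; intros H; [reflexivity|].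
  rewrite IH by (intros; apply H; lia). rewrite H by lia. reflexivity.
Qed.

Lemma sumR_add n f g : sumR n (fun k => f k + g k) = sumR n f + sumR n g.
Proof. induction n; simpl; [ring|]. rewrite IHn; ring. Qed.

Lemma sumR_sub n f g : sumR n (fun k => f k - g k) = sumR n f - sumR n g.
Proof. induction n; simpl; [ring|]. rewrite IHn; ring. Qed.

Lemma sumR_opp n f : sumR n (fun k => - f k) = - sumR n f.
Proof. induction n; simpl; [ring|]. rewrite IHn; ring. Qed.

Lemma sumR_mul_l n c f : c * sumR n f = sumR n (fun k => c * f k).
Proof. induction n; simpl; [ring|]. rewrite <- IHn; ring. Qed.

Lemma sumR_const n c : sumR n (fun _ => c) = INR n * c.
Proof. induction n; simpl; [ring|]. rewrite IHn. destruct n; simpl; ring. Qed.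

Lemma sumR_le n f g : (forall k, (k < n)%nat -> f k <= g k) -> sumR n f <= sumR n g.
Proof.
  induction n; simpl; intros H; [lra|].
  pose proof (H n ltac:(lia)). pose proof (IHn ltac:(intros; apply H; lia)). lra.
Qed.

Lemma sumR_nonneg n f : (forall k, (k < n)%nat -> 0 <= f k) -> 0 <= sumR n f.
Proof.
  intros H. replace 0 with (sumR n (fun _ => 0)) by (rewrite sumR_const; ring).
  now apply sumR_le.
Qed.

Lemma sumR_term_le n f k :
  (forall j, (j < n)%nat -> 0 <= f j) -> (k < n)%nat -> f k <= sumR n f.
Proof.
  induction n; intros H Hk; [lia|]. simpl. destruct (Nat.eq_dec k n) as [->|Hkn].
  - pose proof (sumR_nonneg n f ltac:(intros; apply H; lia)). lra.
  - pose proof (IHn ltac:(intros; apply H; lia) ltac:(lia)). pose proof (H n ltac:(lia)). lra.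
Qed.

Lemma sumR_swap n m (f : nat -> nat -> R) :
  sumR n (fun i => sumR m (fun j => f i j)) = sumR m (fun j => sumR n (fun i => f i j)).
Proof.
  induction n; simpl.
  - rewrite sumR_const; ring.
  - rewrite IHn, <- sumR_add. reflexivity.
Qed.

Lemma sumR_split a b f : sumR (a + b) f = sumR a f + sumR b (fun k => f (a + k)%nat).
Proof.
  induction b; simpl.
  - rewrite Nat.add_0_r; ring.
  - rewrite Nat.add_succ_r. simpl. rewrite IHb. ring.
Qed.

Lemma sumR_first n f : sumR (S n) f = f O + sumR n (fun k => f (S k)).
Proof. change (S n) with (1 + n)%nat. rewrite sumR_split. simpl. ring. Qed.

Lemma sumR_pair_flatten d n f :
  sumR d (fun j => sumR n (fun k => f (j * n + k)%nat)) = sumR (d * n) f.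
Proof.
  induction d; simpl; [reflexivity|]. rewrite IHd, Nat.add_comm, sumR_split. reflexivity.
Qed.

Lemma sumR_indicator_le_1 n (b : nat -> bool) c :
  (forall k, b k = true -> k = c) -> sumR n (fun k => if b k then 1 else 0) <= 1.
Proof.
  intros Hb. induction n; simpl; [lra|].
  destruct (b n) eqn:E; [|lra].
  apply Hb in E. subst.
  replace (sumR c _) with (sumR c (fun _ => 0)).
  - rewrite sumR_const. lra.
  - apply sumR_ext. intros k Hk. destruct (b k) eqn:E'; [apply Hb in E'; lia|reflexivity].
Qed.

Lemma sumR_Cauchy_Schwarz_sq n x y :
  (sumR n (fun k => x k * y k)) ^ 2
  <= sumR n (fun k => x k ^ 2) * sumR n (fun k => y k ^ 2).
Proof.
  set (A := sumR n (fun k => x k ^ 2)). set (B := sumR n (fun k => y k ^ 2)).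
  set (P := sumR n (fun k => x k * y k)).
  assert (Hquad : forall t, 0 <= A - 2 * t * P + t ^ 2 * B).
  { intro t. replace (A - 2 * t * P + t ^ 2 * B) with (sumR n (fun k => (x k - t * y k) ^ 2)).
    - apply sumR_nonneg. intros; apply pow2_ge_0.
    - unfold A, B, P. rewrite !sumR_mul_l, <- sumR_sub, <- sumR_add.
      apply sumR_ext; intros; ring. }
  assert (HB : 0 <= B) by (apply sumR_nonneg; intros; apply pow2_ge_0).
  destruct (Req_dec B 0) as [HB0|HB0].
  - assert (P = 0) as ->.
    { destruct (Req_dec P 0) as [|HP]; auto. exfalso.
      pose proof (Hquad ((A + 1) / (2 * P))) as H. rewrite HB0 in H.
      replace (A - 2 * ((A + 1) / (2 * P)) * P + ((A + 1) / (2 * P)) ^ 2 * 0)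
        with (A - (A + 1)) in H by (field; auto). lra. }
    rewrite HB0. lra.
  - pose proof (Hquad (P / B)) as H.
    assert (0 <= (A - 2 * (P / B) * P + (P / B) ^ 2 * B) * B) by (apply Rmult_le_pos; lra).
    replace ((A - 2 * (P / B) * P + (P / B) ^ 2 * B) * B) with (A * B - P ^ 2) in * by (field; lra).
    lra.
Qed.

Lemma sumR_Cauchy_Schwarz n x y :
  sumR n (fun k => x k * y k)
  <= sqrt (sumR n (fun k => x k ^ 2)) * sqrt (sumR n (fun k => y k ^ 2)).
Proof.
  rewrite <- sqrt_mult by (apply sumR_nonneg; intros; apply pow2_ge_0).
  destruct (Rle_dec (sumR n (fun k => x k * y k)) 0).
  { pose proof (sqrt_pos (sumR n (fun k => x k ^ 2) * sumR n (fun k => y k ^ 2))). lra. }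
  rewrite <- (sqrt_pow2 (sumR n (fun k => x k * y k))) by lra.
  apply sqrt_le_1_alt, sumR_Cauchy_Schwarz_sq.
Qed.

Lemma sumR_indicator_sq_le n w a :
  (forall k, (k < n)%nat -> w k * w k = w k) -> sumR n w <= 1 ->
  (sumR n (fun k => w k * a k)) ^ 2 <= sumR n (fun k => w k * a k ^ 2).
Proof.
  intros Hidem Hmass.
  assert (Hw : forall k, (k < n)%nat -> 0 <= w k)
    by (intros k Hk; rewrite <- Hidem by exact Hk; apply Rle_0_sqr).
  assert (Hrhs : 0 <= sumR n (fun k => w k * a k ^ 2))
    by (apply sumR_nonneg; intros k Hk; pose proof (Hw k Hk); pose proof (pow2_ge_0 (a k)); nra).
  rewrite (sumR_ext n (fun k => w k * a k) (fun k => w k * (w k * a k)))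
    by (intros k Hk; rewrite <- Rmult_assoc, Hidem; auto).
  eapply Rle_trans; [apply (sumR_Cauchy_Schwarz_sq n w (fun k => w k * a k))|].
  rewrite (sumR_ext n (fun k => w k ^ 2) w) by (intros; simpl; rewrite Rmult_1_r; auto).
  rewrite (sumR_ext n (fun k => (w k * a k) ^ 2) (fun k => w k * a k ^ 2))
    by (intros k Hk; replace ((w k * a k) ^ 2) with ((w k * w k) * a k ^ 2) by ring;
        rewrite Hidem; auto).
  pose proof (sumR_nonneg n w Hw). nra.
Qed.

Lemma maxR_le n f T : (forall k, (k < n)%nat -> f k <= T) -> 0 <= T -> maxR n f <= T.
Proof. induction n; intros H HT; simpl; auto. apply Rmax_lub; auto. Qed.

Lemma maxR_ge n f k : (k < n)%nat -> f k <= maxR n f.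
Proof.
  induction n; intros Hk; simpl; [lia|]. destruct (Nat.eq_dec k n) as [->|].
  - apply Rmax_r.
  - eapply Rle_trans; [apply IHn; lia|apply Rmax_l].
Qed.

Lemma maxR_nonneg n f : 0 <= maxR n f.
Proof. induction n; simpl; [lra|]. eapply Rle_trans; [apply IHn|apply Rmax_l]. Qed.

Lemma sumC_ext n f g : (forall k, (k < n)%nat -> f k = g k) -> sumC n f = sumC n g.
Proof.
  induction n as [|n IH]; simpl; intros H; [reflexivity|].
  rewrite IH by (intros; apply H; lia). rewrite H by lia. reflexivity.
Qed.

Lemma sumC_zero n : sumC n (fun _ => C0) = C0.
Proof. induction n; simpl; [reflexivity|]. rewrite IHn; ring. Qed.

Lemma sumC_add n f g : sumC n (fun k => Cadd (f k) (g k)) = Cadd (sumC n f) (sumC n g).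
Proof. induction n; simpl; [ring|]. rewrite IHn; ring. Qed.

Lemma sumC_sub n f g : sumC n (fun k => Csub (f k) (g k)) = Csub (sumC n f) (sumC n g).
Proof. induction n; simpl; [ring|]. rewrite IHn; ring. Qed.

Lemma sumC_mul_l n c f : Cmul c (sumC n f) = sumC n (fun k => Cmul c (f k)).
Proof. induction n; simpl; [ring|]. rewrite <- IHn; ring. Qed.

Lemma sumC_mul_r n c f : Cmul (sumC n f) c = sumC n (fun k => Cmul (f k) c).
Proof. induction n; simpl; [ring|]. rewrite <- IHn; ring. Qed.

Lemma sumC_swap n m (f : nat -> nat -> C) :
  sumC n (fun i => sumC m (fun j => f i j)) = sumC m (fun j => sumC n (fun i => f i j)).
Proof.
  induction n; simpl.
  - now rewrite sumC_zero.
  - rewrite IHn, <- sumC_add. reflexivity.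
Qed.

Lemma sumC_delta n c f :
  (c < n)%nat -> sumC n (fun k => if Nat.eqb k c then f k else C0) = f c.
Proof.
  induction n; intros Hc; [lia|]. simpl. destruct (Nat.eqb_spec n c) as [->|].
  - replace (sumC c _) with (sumC c (fun _ => C0)).
    + rewrite sumC_zero. ring.
    + apply sumC_ext. intros k Hk. destruct (Nat.eqb_spec k c); [lia|reflexivity].
  - rewrite IHn by lia. ring.
Qed.

Lemma sumC_conj n f : Cconj (sumC n f) = sumC n (fun k => Cconj (f k)).
Proof.
  induction n; simpl.
  - apply C_ext; simpl; ring.
  - rewrite Cconj_add, IHn. reflexivity.
Qed.

Lemma Cre_sumC n f : Cre (sumC n f) = sumR n (fun k => Cre (f k)).
Proof. induction n; simpl; [reflexivity|]. rewrite IHn. reflexivity. Qed.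

Lemma Cim_sumC n f : Cim (sumC n f) = sumR n (fun k => Cim (f k)).
Proof. induction n; simpl; [reflexivity|]. rewrite IHn. reflexivity. Qed.

Lemma sumC_CR n f : sumC n (fun k => CR (f k)) = CR (sumR n f).
Proof. induction n; simpl; [reflexivity|]. rewrite IHn. apply C_ext; simpl; ring. Qed.

Lemma Cmod_sumC_le n f : Cmod (sumC n f) <= sumR n (fun k => Cmod (f k)).
Proof.
  induction n; simpl.
  - rewrite Cmod_C0; lra.
  - pose proof (Cmod_triangle (sumC n f) (f n)). lra.
Qed.

Lemma sumC_Cauchy_Schwarz n (z w : nat -> C) :
  Cmod (sumC n (fun k => Cmul (z k) (w k)))
  <= sqrt (sumR n (fun k => Cmod (z k) ^ 2)) * sqrt (sumR n (fun k => Cmod (w k) ^ 2)).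
Proof.
  eapply Rle_trans; [apply Cmod_sumC_le|].
  eapply Rle_trans; [|apply sumR_Cauchy_Schwarz].
  right. apply sumR_ext. intros. apply Cmod_mul.
Qed.

(** * Bernoulli sampling *)

Lemma bern_expect_nil p f : bern_expect 0 p f = f nil.
Proof. unfold bern_expect; simpl. ring. Qed.

Lemma bern_expect_cons N p f :
  bern_expect (S N) p f =
  p * bern_expect N p (fun om => f (true :: om))
  + (1 - p) * bern_expect N p (fun om => f (false :: om)).
Proof.
  set (E := fun L (g : list bool -> R) =>
    fold_right (fun om acc => bern_weight p om * g om + acc) 0 L).
  assert (Happ : forall L1 L2 g, E (L1 ++ L2) g = E L1 g + E L2 g)
    by (induction L1; intros; simpl; [ring|]; unfold E in *; simpl; rewrite IHL1; ring).
  assert (Hmap : forall L b g,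
    E (map (cons b) L) g = (if b then p else 1 - p) * E L (fun om => g (b :: om)))
    by (induction L; intros; unfold E in *; simpl; [ring|]; rewrite IHL; ring).
  change (bern_expect (S N) p f) with (E (allbits (S N)) f). simpl.
  rewrite Happ, !Hmap. reflexivity.
Qed.

Lemma bern_expect_ext N p f g :
  (forall om, f om = g om) -> bern_expect N p f = bern_expect N p g.
Proof. intros H. f_equal. extensionality om. auto. Qed.

Lemma bern_expect_lin N p a b f g :
  bern_expect N p (fun om => a * f om + b * g om)
  = a * bern_expect N p f + b * bern_expect N p g.
Proof.
  revert f g. induction N; intros f g.
  - rewrite !bern_expect_nil. reflexivity.
  - rewrite !bern_expect_cons, !IHN. ring.
Qed.

Lemma bern_expect_const N p c : bern_expect N p (fun _ => c) = c.
Proof.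
  induction N.
  - apply bern_expect_nil.
  - rewrite bern_expect_cons, IHN. ring.
Qed.

Lemma bern_expect_scal N p c f :
  bern_expect N p (fun om => c * f om) = c * bern_expect N p f.
Proof.
  rewrite (bern_expect_ext N p _ (fun om => c * f om + 0 * f om)) by (intros; ring).
  rewrite bern_expect_lin. ring.
Qed.

Lemma bern_expect_add N p f g :
  bern_expect N p (fun om => f om + g om) = bern_expect N p f + bern_expect N p g.
Proof.
  rewrite (bern_expect_ext N p _ (fun om => 1 * f om + 1 * g om)) by (intros; ring).
  rewrite bern_expect_lin. ring.
Qed.

Lemma bern_expect_sumR N p K (f : nat -> list bool -> R) :
  bern_expect N p (fun om => sumR K (fun x => f x om)) = sumR K (fun x => bern_expect N p (f x)).
Proof.
  induction K; simpl.
  - apply bern_expect_const.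
  - rewrite bern_expect_add, IHK. reflexivity.
Qed.

Lemma bern_expect_le N p f g :
  0 <= p <= 1 -> (forall om, f om <= g om) -> bern_expect N p f <= bern_expect N p g.
Proof.
  intros Hp. revert f g. induction N; intros f g H.
  - rewrite !bern_expect_nil; auto.
  - rewrite !bern_expect_cons.
    pose proof (IHN _ _ (fun om => H (true :: om))).
    pose proof (IHN _ _ (fun om => H (false :: om))). nra.
Qed.

Fixpoint prodR (N : nat) (g : nat -> R) : R :=
  match N with O => 1 | S k => g O * prodR k (fun m => g (S m)) end.

Lemma exp_sumR N f : exp (sumR N f) = prodR N (fun m => exp (f m)).
Proof.
  revert f. induction N; intros f.
  - apply exp_0.
  - rewrite sumR_first, exp_plus, IHN. reflexivity.
Qed.

Lemma prodR_le N a b :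
  (forall m, (m < N)%nat -> 0 <= a m <= b m) -> prodR N a <= prodR N b.
Proof.
  assert (Hpos : forall N a, (forall m, (m < N)%nat -> 0 <= a m) -> 0 <= prodR N a).
  { induction N0; intros a0 H; simpl; [lra|].
    apply Rmult_le_pos; [apply H; lia|apply IHN0; intros; apply H; lia]. }
  revert a b. induction N; intros a b H; simpl; [lra|].
  pose proof (Hpos N (fun m => a (S m)) ltac:(intros; apply H; lia)).
  pose proof (IHN (fun m => a (S m)) (fun m => b (S m)) ltac:(intros; apply H; lia)).
  pose proof (H O ltac:(lia)). nra.
Qed.

(* The coordinates of [om] are independent Bernoulli(p) bits. *)
Lemma bern_expect_prodR N p (g : nat -> bool -> R) :
  bern_expect N p (fun om => prodR N (fun m => g m (nth m om false)))
  = prodR N (fun m => p * g m true + (1 - p) * g m false).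
Proof.
  revert g. induction N; intros g.
  - apply bern_expect_nil.
  - rewrite bern_expect_cons. simpl.
    rewrite (bern_expect_scal N p (g O true)), (bern_expect_scal N p (g O false)).
    rewrite (IHN (fun m => g (S m))). ring.
Qed.

Lemma exp_le_compat x y : x <= y -> exp x <= exp y.
Proof. intros [H|H]; [left; apply exp_increasing; exact H|right; rewrite H; reflexivity]. Qed.

Lemma exp_le_quadratic x : x <= 1/2 -> exp x <= 1 + x + 2 * x ^ 2.
Proof.
  intros H. pose proof (exp_ineq1_le (- x)) as Hneg. rewrite exp_Ropp in Hneg.
  pose proof (exp_pos x).
  assert (1 <= (1 + x + 2 * x ^ 2) * (1 - x)) by nra.
  apply (Rmult_le_reg_r (/ exp x)); [apply Rinv_0_lt_compat; auto|].
  rewrite Rinv_r by lra. apply Rle_trans with ((1 + x + 2 * x ^ 2) * (1 - x)); auto.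
  apply Rmult_le_compat_l; [nra|lra].
Qed.

Lemma bernoulli_mgf_le p y :
  0 < p <= 1 -> Rabs y / p <= 1/2 ->
  p * exp (y * (1 - p) / p) + (1 - p) * exp (- y) <= exp (2 * y ^ 2 / p).
Proof.
  intros Hp Hy.
  assert (Hy1 : Rabs y <= Rabs y / p).
  { unfold Rdiv. rewrite <- (Rmult_1_r (Rabs y)) at 1.
    apply Rmult_le_compat_l; [apply Rabs_pos|].
    rewrite <- Rinv_1. apply Rinv_le_contravar; lra. }
  assert (Hup : exp (y * (1 - p) / p) <= 1 + y * (1 - p) / p + 2 * (y * (1 - p) / p) ^ 2).
  { apply exp_le_quadratic. apply Rle_trans with (Rabs y / p); [|auto].
    eapply Rle_trans; [apply RRle_abs|].
    unfold Rdiv. rewrite !Rabs_mult, (Rabs_right (1 - p)), (Rabs_right (/ p)) by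
      (apply Rle_ge; try apply Rlt_le, Rinv_0_lt_compat; lra).
    pose proof (Rabs_pos y). assert (0 < / p) by (apply Rinv_0_lt_compat; lra).
    assert (0 <= Rabs y * / p) by (apply Rmult_le_pos; lra). nra. }
  assert (Hdown : exp (- y) <= 1 + - y + 2 * (- y) ^ 2).
  { apply exp_le_quadratic. pose proof (RRle_abs (- y)). rewrite Rabs_Ropp in *. lra. }
  pose proof (exp_ineq1_le (2 * y ^ 2 / p)).
  (* The linear terms cancel: the variable is centred. *)
  assert (Hcomb : p * (1 + y * (1 - p) / p + 2 * (y * (1 - p) / p) ^ 2)
                  + (1 - p) * (1 + - y + 2 * (- y) ^ 2) = 1 + 2 * y ^ 2 * (1 - p) / p)
    by (field; lra).
  assert (2 * y ^ 2 * (1 - p) / p <= 2 * y ^ 2 / p).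
  { unfold Rdiv. assert (0 < / p) by (apply Rinv_0_lt_compat; lra).
    pose proof (pow2_ge_0 y). nra. }
  nra.
Qed.

Definition bern_sum (N : nat) (p : R) (z : nat -> R) (om : list bool) : R :=
  sumR N (fun m => ((if nth m om false then 1 else 0) / p - 1) * z m).

Lemma bern_sum_opp N p z om : bern_sum N p (fun m => - z m) om = - bern_sum N p z om.
Proof. unfold bern_sum. rewrite <- sumR_opp. apply sumR_ext; intros; ring. Qed.

Lemma bern_sum_mgf_le N p z B lam :
  0 < p <= 1 -> 0 <= lam -> (forall m, (m < N)%nat -> Rabs (z m) <= B) -> lam * (B / p) <= 1/2 ->
  bern_expect N p (fun om => exp (lam * bern_sum N p z om))
  <= exp (2 * lam ^ 2 * sumR N (fun m => z m ^ 2) / p).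
Proof.
  intros Hp Hlam Hz Hb.
  set (g := fun m (b : bool) => exp (lam * (((if b then 1 else 0) / p - 1) * z m))).
  rewrite (bern_expect_ext N p _ (fun om => prodR N (fun m => g m (nth m om false))))
    by (intros om; unfold bern_sum; rewrite sumR_mul_l, exp_sumR; reflexivity).
  rewrite bern_expect_prodR.
  replace (2 * lam ^ 2 * sumR N (fun m => z m ^ 2) / p)
    with (sumR N (fun m => 2 * (lam * z m) ^ 2 / p))
    by (unfold Rdiv; rewrite Rmult_comm, sumR_mul_l, sumR_mul_l; apply sumR_ext; intros; ring).
  rewrite exp_sumR. apply prodR_le. intros m Hm. unfold g. split.
  - pose proof (exp_pos (lam * ((1 / p - 1) * z m))).
    pose proof (exp_pos (lam * ((0 / p - 1) * z m))). nra.
  - replace (lam * ((1 / p - 1) * z m)) with (lam * z m * (1 - p) / p) by (field; lra).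
    replace (lam * ((0 / p - 1) * z m)) with (- (lam * z m)) by (field; lra).
    apply bernoulli_mgf_le; auto.
    rewrite Rabs_mult, (Rabs_right lam) by lra. unfold Rdiv. rewrite Rmult_assoc.
    eapply Rle_trans; [|apply Hb]. apply Rmult_le_compat_l; auto.
    apply Rmult_le_compat_r; [apply Rlt_le, Rinv_0_lt_compat; lra|auto].
Qed.

Lemma bern_sum_chernoff N p z B lam tau :
  0 < p <= 1 -> 0 <= lam -> (forall m, (m < N)%nat -> Rabs (z m) <= B) -> lam * (B / p) <= 1/2 ->
  bern_expect N p (fun om => if Rle_dec (bern_sum N p z om) tau then 0 else 1)
  <= exp (- lam * tau + 2 * lam ^ 2 * sumR N (fun m => z m ^ 2) / p).
Proof.
  intros Hp Hlam Hz Hb.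
  apply Rle_trans with
    (bern_expect N p (fun om => exp (- lam * tau) * exp (lam * bern_sum N p z om))).
  - apply bern_expect_le; [lra|]. intros om.
    destruct (Rle_dec (bern_sum N p z om) tau).
    + pose proof (exp_pos (- lam * tau)). pose proof (exp_pos (lam * bern_sum N p z om)). nra.
    + rewrite <- exp_plus. pose proof (exp_ineq1_le (- lam * tau + lam * bern_sum N p z om)). nra.
  - rewrite bern_expect_scal, exp_plus.
    apply Rmult_le_compat_l; [left; apply exp_pos|].
    apply bern_sum_mgf_le with B; auto.
Qed.

(* Bernstein's inequality, with the Chernoff parameter [lam = 4 L / tau]. *)
Lemma bern_sum_bernstein N p z B s2 L tau :
  0 < p <= 1 -> 0 <= B -> (forall m, (m < N)%nat -> Rabs (z m) <= B) ->
  sumR N (fun m => z m ^ 2) <= s2 -> 0 <= L -> 0 <= tau ->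
  8 * (B / p) * L <= tau -> 16 * L * (s2 / p) <= tau ^ 2 ->
  bern_expect N p (fun om => if Rle_dec (bern_sum N p z om) tau then 0 else 1) <= exp (- 2 * L).
Proof.
  intros Hp HB Hz Hs2 HL Htau Hlin Hquad.
  assert (Hip : 0 < / p) by (apply Rinv_0_lt_compat; lra).
  destruct HL as [HL|<-].
  2:{ replace (- 2 * 0) with 0 by ring. rewrite exp_0.
    apply Rle_trans with (bern_expect N p (fun _ => 1)); [|rewrite bern_expect_const; lra].
    apply bern_expect_le; [lra|]. intros om. destruct (Rle_dec _ _); lra. }
  destruct (Req_dec tau 0) as [Htau0|Htau0].
  - assert (HB0 : B = 0).
    { subst tau. unfold Rdiv in Hlin. assert (0 <= B * / p) by (apply Rmult_le_pos; lra).
      assert (B * / p = 0) by nra. apply Rmult_integral in H0 as [|]; lra. }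
    apply Rle_trans with 0; [|left; apply exp_pos].
    right. transitivity (bern_expect N p (fun _ => 0)); [|apply bern_expect_const].
    apply bern_expect_ext. intros om. destruct (Rle_dec _ _) as [|Hgt]; [reflexivity|].
    exfalso. apply Hgt. unfold bern_sum.
    rewrite (sumR_ext N _ (fun _ => 0)) by (intros m Hm; pose proof (Hz m Hm);
      assert (z m = 0) as -> by (pose proof (Rle_abs (z m)); pose proof (Rle_abs (- z m)); rewrite Rabs_Ropp in *; lra); ring).
    rewrite sumR_const. lra.
  - set (lam := 4 * L / tau).
    assert (Hlam : 0 <= lam) by (unfold lam, Rdiv; apply Rmult_le_pos; [lra|left; apply Rinv_0_lt_compat; lra]).
    eapply Rle_trans.
    { apply (bern_sum_chernoff N p z B lam tau); auto.
      unfold lam. apply (Rmult_le_reg_r tau); [lra|].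
      replace (4 * L / tau * (B / p) * tau) with (4 * (B / p) * L) by (field; lra). lra. }
    apply exp_le_compat.
    assert (2 * lam ^ 2 * sumR N (fun m => z m ^ 2) / p <= 2 * lam ^ 2 * (s2 / p)).
    { unfold Rdiv. rewrite Rmult_assoc. apply Rmult_le_compat_l; [nra|].
      apply Rmult_le_compat_r; lra. }
    assert (2 * lam ^ 2 * (s2 / p) <= 2 * L).
    { unfold lam. apply (Rmult_le_reg_r (tau ^ 2)); [nra|].
      replace (2 * (4 * L / tau) ^ 2 * (s2 / p) * tau ^ 2) with (2 * L * (16 * L * (s2 / p)))
        by (field; lra).
      apply Rmult_le_compat_l; lra. }
    replace (- lam * tau) with (- 4 * L) by (unfold lam; field; lra). lra.
Qed.

(** * Linearity of the operators *)

Definition mcmul (c : C) (M : Mat) : Mat := fun j k => Cmul c (M j k).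
Definition badd (A B : Blocks) : Blocks := fun i => madd (A i) (B i).
Definition bcmul (f : nat -> C) (A : Blocks) : Blocks := fun i => mcmul (f i) (A i).

Ltac mat_ext := let j := fresh "j" in let k := fresh "k" in extensionality j; extensionality k.

Lemma mmul_addl k A B M : mmul k (madd A B) M = madd (mmul k A M) (mmul k B M).
Proof. mat_ext. unfold mmul, madd. rewrite <- sumC_add. apply sumC_ext; intros; ring. Qed.

Lemma mmul_addr k A B M : mmul k M (madd A B) = madd (mmul k M A) (mmul k M B).
Proof. mat_ext. unfold mmul, madd. rewrite <- sumC_add. apply sumC_ext; intros; ring. Qed.

Lemma mmul_mcmull k c A B : mmul k (mcmul c A) B = mcmul c (mmul k A B).
Proof. mat_ext. unfold mmul, mcmul. rewrite sumC_mul_l. apply sumC_ext; intros; ring. Qed.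

Lemma mmul_mcmulr k c A B : mmul k A (mcmul c B) = mcmul c (mmul k A B).
Proof. mat_ext. unfold mmul, mcmul. rewrite sumC_mul_l. apply sumC_ext; intros; ring. Qed.

Lemma PT_add m r U V A B : PT m r U V (badd A B) = badd (PT m r U V A) (PT m r U V B).
Proof.
  extensionality i. unfold PT, badd. cbv beta zeta.
  rewrite mmul_addr, !mmul_addl. mat_ext. unfold msub, madd. ring.
Qed.

Lemma PT_bcmul m r U V f A : PT m r U V (bcmul f A) = bcmul f (PT m r U V A).
Proof.
  extensionality i. unfold PT, bcmul. cbv beta zeta.
  rewrite mmul_mcmulr, !mmul_mcmull. mat_ext. unfold msub, madd, mcmul. ring.
Qed.

Lemma binner_add d n A B G : binner d n (badd A B) G = Cadd (binner d n A G) (binner d n B G).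
Proof.
  unfold binner, badd, madd. rewrite <- sumC_add. apply sumC_ext; intros.
  rewrite <- sumC_add. apply sumC_ext; intros.
  rewrite <- sumC_add. apply sumC_ext; intros. ring.
Qed.

Lemma binner_bcmul_l d n c A G : binner d n (bcmul (fun _ => c) A) G = Cmul c (binner d n A G).
Proof.
  unfold binner, bcmul, mcmul. rewrite sumC_mul_l. apply sumC_ext; intros.
  rewrite sumC_mul_l. apply sumC_ext; intros.
  rewrite sumC_mul_l. apply sumC_ext; intros. ring.
Qed.

Lemma binner_sub d n A B G : binner d n (bsub A B) G = Csub (binner d n A G) (binner d n B G).
Proof.
  unfold binner, bsub, msub. rewrite <- sumC_sub. apply sumC_ext; intros.
  rewrite <- sumC_sub. apply sumC_ext; intros.
  rewrite <- sumC_sub. apply sumC_ext; intros. ring.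
Qed.

Lemma Hank_add n x y : Hank n (fun a => Cadd (x a) (y a)) = madd (Hank n x) (Hank n y).
Proof. mat_ext. unfold Hank, madd. rewrite <- sumC_add. apply sumC_ext; intros; ring. Qed.

Lemma Hank_cmul n c x : Hank n (fun a => Cmul c (x a)) = mcmul c (Hank n x).
Proof. mat_ext. unfold Hank, mcmul. rewrite sumC_mul_l. apply sumC_ext; intros; ring. Qed.

Lemma Ghat_add d n W1 W2 : Ghat d n (madd W1 W2) = badd (Ghat d n W1) (Ghat d n W2).
Proof.
  extensionality i. unfold Ghat, badd. rewrite <- Hank_add. f_equal. extensionality a.
  unfold madd. rewrite <- sumC_add. apply sumC_ext; intros; ring.
Qed.

Lemma Ghat_mcmul d n c W : Ghat d n (mcmul c W) = bcmul (fun _ => c) (Ghat d n W).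
Proof.
  extensionality i. unfold Ghat, bcmul. rewrite <- Hank_cmul. f_equal. extensionality a.
  unfold mcmul. rewrite sumC_mul_l. apply sumC_ext; intros; ring.
Qed.

Lemma Ghat_ext d n W W' :
  (forall j k, (j < d)%nat -> (k < n)%nat -> W j k = W' j k) -> Ghat d n W = Ghat d n W'.
Proof.
  intros H. extensionality i. unfold Ghat, Hank. mat_ext.
  apply sumC_ext; intros a Ha. f_equal. apply sumC_ext; intros l Hl. rewrite H by auto. reflexivity.
Qed.

Definition msum (N : nat) (f : nat -> Mat) : Mat := fun j k => sumC N (fun t => f t j k).

Lemma linear_expand_Eunit d n (Phi : Mat -> C)
  (Hadd : forall A B, Phi (madd A B) = Cadd (Phi A) (Phi B))
  (Hcmul : forall c A, Phi (mcmul c A) = Cmul c (Phi A))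
  (Hext : forall W W', (forall j k, (j < d)%nat -> (k < n)%nat -> W j k = W' j k) -> Phi W = Phi W')
  (W : Mat) :
  Phi W = sumC d (fun j => sumC n (fun k => Cmul (W j k) (Phi (Eunit j k)))).
Proof.
  assert (Hzero : Phi (fun _ _ => C0) = C0).
  { replace (fun _ _ : nat => C0) with (mcmul C0 (fun _ _ => C0)) by (mat_ext; unfold mcmul; ring).
    rewrite Hcmul. ring. }
  assert (Hsum : forall N f, Phi (msum N f) = sumC N (fun t => Phi (f t))).
  { induction N; intros f; simpl; [apply Hzero|]. rewrite <- IHN, <- Hadd. reflexivity. }
  rewrite (Hext W (msum d (fun j => msum n (fun k => mcmul (W j k) (Eunit j k))))).
  - rewrite Hsum. apply sumC_ext; intros j Hj. rewrite Hsum. apply sumC_ext; intros k Hk.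
    apply Hcmul.
  - intros j' k' Hj' Hk'. unfold msum, mcmul, Eunit.
    rewrite (sumC_ext d _ (fun j => if Nat.eqb j j' then W j k' else C0)).
    + rewrite sumC_delta by auto. reflexivity.
    + intros j Hj.
      rewrite (sumC_ext n _ (fun k => if Nat.eqb k k' then (if Nat.eqb j j' then W j k else C0) else C0)).
      * rewrite sumC_delta by auto. reflexivity.
      * intros k Hk. destruct (Nat.eqb_spec k k'), (Nat.eqb_spec j j'), (Nat.eqb_spec j' j),
          (Nat.eqb_spec k' k); simpl; subst; try lia; ring.
Qed.

(* With [W = e_j e_k^T] and [G = Ghat_{l,a}] this is the coefficient c_{jk} through which the
   sampled operator acts on the (l,a) entry. *)
Definition tangent_coef d n r U V (G : Blocks) (W : Mat) : C :=
  binner d n (PT (hsize n) r U V (Ghat d n W)) G.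

Lemma tangent_coef_expand d n r U V G W :
  tangent_coef d n r U V G W
  = sumC d (fun j => sumC n (fun k => Cmul (W j k) (tangent_coef d n r U V G (Eunit j k)))).
Proof.
  apply linear_expand_Eunit; unfold tangent_coef.
  - intros. rewrite Ghat_add, PT_add, binner_add. reflexivity.
  - intros. rewrite Ghat_mcmul, PT_bcmul, binner_bcmul_l. reflexivity.
  - intros W0 W' H. rewrite (Ghat_ext d n W0 W' H). reflexivity.
Qed.

Definition sample_bit (n : nat) (om : list bool) (j k : nat) : R :=
  if nth (j * n + k)%nat om false then 1 else 0.

Lemma binner_lemma_op_expand d n r U V p om Z G : 0 < p ->
  binner d n (lemma_op d n r U V p om Z) G =
  sumC d (fun j => sumC n (fun k =>
    Cmul (CR (sample_bit n om j k / p - 1))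
         (Cmul (Gstar d n Z j k) (tangent_coef d n r U V G (Eunit j k))))).
Proof.
  intros Hp. unfold lemma_op. rewrite binner_sub.
  set (Y := Gstar d n Z).
  replace (fun i => mscale (/ p) (Ghat d n (POmega n om Y) i))
    with (Ghat d n (mcmul (CR (/ p)) (POmega n om Y))).
  2:{ rewrite Ghat_mcmul. extensionality i. unfold bcmul, mscale, mcmul. mat_ext.
      apply C_ext; simpl; ring. }
  fold (tangent_coef d n r U V G (mcmul (CR (/ p)) (POmega n om Y))).
  fold (tangent_coef d n r U V G Y).
  rewrite (tangent_coef_expand d n r U V G (mcmul _ _)), (tangent_coef_expand d n r U V G Y).
  rewrite <- sumC_sub. apply sumC_ext; intros j Hj. rewrite <- sumC_sub. apply sumC_ext; intros k Hk.
  unfold mcmul, POmega, sample_bit.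
  destruct (nth (j * n + k) om false); apply C_ext; simpl; field; lra.
Qed.

(** * Hankel basis, DFT and tangent-space projections *)

Lemma Cmod_Fdft d i j : (1 <= d)%nat -> Cmod (Fdft d i j) = / sqrt (INR d).
Proof.
  intros Hd. unfold Fdft.
  rewrite Cmod_scale by (apply Rlt_le, Rinv_0_lt_compat, sqrt_lt_R0, lt_0_INR; lia).
  unfold Cmod; cbn [Cre Cim].
  match goal with |- _ * sqrt ?e = _ => replace e with 1 end.
  - rewrite sqrt_1; ring.
  - rewrite <- (sin2_cos2 (- 2 * PI * INR (i * j) / INR d)). unfold Rsqr. ring.
Qed.

Lemma GhatE_eq d n j k : (j < d)%nat -> (k < n)%nat ->
  GhatE d n j k = bcmul (fun i => Fdft d i j) (fun _ => Gmat n k).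
Proof.
  intros Hj Hk. unfold GhatE, Ghat, bcmul, mcmul, Hank.
  extensionality i. extensionality s. extensionality t.
  rewrite (sumC_ext n _ (fun a => if Nat.eqb a k then Cmul (Fdft d i j) (Gmat n a s t) else C0)).
  - apply sumC_delta; auto.
  - intros a Ha. unfold Eunit.
    rewrite (sumC_ext d _ (fun l => if Nat.eqb l j then (if Nat.eqb a k then Fdft d i l else C0) else C0)).
    + rewrite sumC_delta by auto. destruct (Nat.eqb a k); ring.
    + intros l Hl. destruct (Nat.eqb l j), (Nat.eqb a k); simpl; ring.
Qed.

Definition hind (n k s t : nat) : R :=
  if (Nat.ltb s (hsize n) && Nat.ltb t (hsize n) && Nat.eqb (s + t) k)%bool then 1 else 0.

Definition Gentry (n k : nat) : R := / sqrt (hw n k).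

Lemma hind_idem n k s t : hind n k s t * hind n k s t = hind n k s t.
Proof. unfold hind; destruct (_ && _ && _)%bool; ring. Qed.

Lemma hind_nonneg n k s t : 0 <= hind n k s t.
Proof. unfold hind; destruct (_ && _ && _)%bool; lra. Qed.

Lemma sumR_hind_row n k t N : sumR N (fun s => hind n k s t) <= 1.
Proof.
  apply (sumR_indicator_le_1 N _ (k - t)).
  intros s H. apply andb_prop in H as [_ H]. apply Nat.eqb_eq in H. lia.
Qed.

Lemma sumR_hind_col n k s N : sumR N (fun t => hind n k s t) <= 1.
Proof.
  apply (sumR_indicator_le_1 N _ (k - s)).
  intros t H. apply andb_prop in H as [_ H]. apply Nat.eqb_eq in H. lia.
Qed.

Lemma sumR_hind n a : sumR (hsize n) (fun s => sumR (hsize n) (fun t => hind n a s t)) = hw n a.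
Proof.
  unfold hw. apply sumR_ext; intros s Hs. apply sumR_ext; intros t Ht. unfold hind.
  apply Nat.ltb_lt in Hs, Ht. rewrite Hs, Ht. reflexivity.
Qed.

Lemma Gentry_nonneg n k : 0 <= Gentry n k.
Proof.
  unfold Gentry. destruct (Rle_lt_dec (hw n k) 0).
  - rewrite sqrt_neg_0, Rinv_0 by auto. lra.
  - apply Rlt_le, Rinv_0_lt_compat, sqrt_lt_R0; auto.
Qed.

Lemma Cmod_Gmat n k s t : Cmod (Gmat n k s t) = hind n k s t * Gentry n k.
Proof.
  unfold Gmat, hind. destruct (_ && _ && _)%bool.
  - rewrite Cmod_CR, Rabs_right; [unfold Gentry; ring|]. apply Rle_ge, Gentry_nonneg.
  - rewrite Cmod_C0. ring.
Qed.

Lemma hw_nonneg n a : 0 <= hw n a.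
Proof. unfold hw. apply sumR_nonneg; intros; apply sumR_nonneg; intros. destruct (Nat.eqb _ _); lra. Qed.

Lemma hw_Gentry n a : hw n a * Gentry n a = sqrt (hw n a).
Proof.
  unfold Gentry. pose proof (hw_nonneg n a). destruct (Req_dec (hw n a) 0) as [->|Hne].
  - rewrite sqrt_0. ring.
  - assert (0 < sqrt (hw n a)) by (apply sqrt_lt_R0; lra).
    rewrite <- (sqrt_sqrt (hw n a)) at 1 by lra. field. lra.
Qed.

Lemma hsize_pos n : (1 <= n)%nat -> (0 < hsize n)%nat.
Proof. intros Hn. unfold hsize. apply Nat.div_str_pos. lia. Qed.

(* For odd [n] every anti-diagonal [a < n] of the [(n+1)/2]-square meets it. *)
Lemma hw_ge_1 n a : Nat.Odd n -> (a < n)%nat -> 1 <= hw n a.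
Proof.
  intros [h Hh] Ha.
  assert (Hs : hsize n = S h).
  { unfold hsize. rewrite Hh. replace (2 * h + 1 + 1)%nat with (S h * 2)%nat by lia.
    apply Nat.div_mul. lia. }
  unfold hw. rewrite Hs. set (s := Nat.min a h). set (t := (a - s)%nat).
  assert (s < S h)%nat by (unfold s; lia). assert (t < S h)%nat by (unfold t, s; lia).
  eapply Rle_trans; [|apply (sumR_term_le _ _ s)]; auto.
  - eapply Rle_trans; [|apply (sumR_term_le _ _ t)]; auto.
    + cbv beta. replace (s + t)%nat with a by (unfold t, s; lia). rewrite Nat.eqb_refl. lra.
    + intros; destruct (Nat.eqb _ _); lra.
  - intros; apply sumR_nonneg; intros; destruct (Nat.eqb _ _); lra.
Qed.

Lemma sumR_Cmod_sq_orthonormal m r (X : Mat) (b : nat -> C) :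
  (forall u u', (u < r)%nat -> (u' < r)%nat ->
     sumC m (fun q => Cmul (Cconj (X q u)) (X q u')) = idmat u u') ->
  sumR m (fun q => Cmod (sumC r (fun u => Cmul (X q u) (b u))) ^ 2)
  = sumR r (fun u => Cmod (b u) ^ 2).
Proof.
  intros Horth.
  assert (H : CR (sumR m (fun q => Cmod (sumC r (fun u => Cmul (X q u) (b u))) ^ 2))
              = CR (sumR r (fun u => Cmod (b u) ^ 2))).
  2:{ apply (f_equal Cre) in H. exact H. }
  rewrite <- !sumC_CR.
  rewrite (sumC_ext m _ (fun q => sumC r (fun u => sumC r (fun u' =>
     Cmul (Cmul (b u) (Cconj (b u'))) (Cmul (Cconj (X q u')) (X q u)))))).
  2:{ intros q Hq. rewrite <- Cmul_conj_r, sumC_conj, sumC_mul_r.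
      apply sumC_ext; intros u Hu. rewrite sumC_mul_l. apply sumC_ext; intros u' Hu'.
      rewrite Cconj_mul. ring. }
  rewrite sumC_swap. apply sumC_ext; intros u Hu.
  rewrite sumC_swap, <- Cmul_conj_r.
  rewrite (sumC_ext r _ (fun u' => if Nat.eqb u' u then Cmul (b u') (Cconj (b u)) else C0)).
  - rewrite sumC_delta by auto. reflexivity.
  - intros u' Hu'. rewrite <- sumC_mul_l, Horth by auto. unfold idmat.
    destruct (Nat.eqb_spec u' u) as [->|]; apply C_ext; simpl; ring.
Qed.

Definition row_norm r (U : Blocks) i s : R := sqrt (sumR r (fun u => Cmod (U i s u) ^ 2)).

Lemma row_norm_nonneg r U i s : 0 <= row_norm r U i s.
Proof. apply sqrt_pos. Qed.

Lemma row_norm_sq r U i s : row_norm r U i s ^ 2 = sumR r (fun u => Cmod (U i s u) ^ 2).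
Proof. apply pow2_sqrt, sumR_nonneg. intros; apply pow2_ge_0. Qed.

Definition orthonormal_blocks d n r (U : Blocks) : Prop :=
  forall i u u', (i < d)%nat -> (u < r)%nat -> (u' < r)%nat ->
    mmul (hsize n) (ctrans (U i)) (U i) u u' = idmat u u'.

Definition row_incoherent d n r (U : Blocks) (M : R) : Prop :=
  forall s, (s < hsize n)%nat ->
    / INR d * sumR d (fun i => sumR r (fun u => Cmod (U i s u) ^ 2)) <= M.

Section Projection.
Variables (m r : nat) (U : Blocks) (i : nat).
Local Notation P := (mmul r (U i) (ctrans (U i))).

Lemma Cmod_proj_entry_le s t : Cmod (P s t) <= row_norm r U i s * row_norm r U i t.
Proof.
  unfold mmul, ctrans, row_norm. eapply Rle_trans; [apply sumC_Cauchy_Schwarz|].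
  right. do 2 f_equal. apply sumR_ext; intros. rewrite Cmod_conj. reflexivity.
Qed.

Lemma proj_entry_conj s t : P t s = Cconj (P s t).
Proof.
  unfold mmul, ctrans. rewrite sumC_conj. apply sumC_ext; intros.
  rewrite Cconj_mul, Cconj_involutive. ring.
Qed.

Hypothesis orthoU : forall u u', (u < r)%nat -> (u' < r)%nat ->
  mmul m (ctrans (U i)) (U i) u u' = idmat u u'.

Lemma sumR_proj_row_sq s : sumR m (fun t => Cmod (P s t) ^ 2) = row_norm r U i s ^ 2.
Proof.
  rewrite row_norm_sq.
  rewrite (sumR_ext m _ (fun t => Cmod (sumC r (fun u => Cmul (U i t u) (Cconj (U i s u)))) ^ 2)).
  - rewrite sumR_Cmod_sq_orthonormal by (intros; rewrite <- orthoU by auto; reflexivity).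
    apply sumR_ext; intros; rewrite Cmod_conj; reflexivity.
  - intros t Ht. rewrite <- Cmod_conj, <- proj_entry_conj. reflexivity.
Qed.

Lemma sumR_proj_col_sq t : sumR m (fun s => Cmod (P s t) ^ 2) = row_norm r U i t ^ 2.
Proof.
  rewrite <- sumR_proj_row_sq. apply sumR_ext; intros s Hs.
  rewrite proj_entry_conj, Cmod_conj. reflexivity.
Qed.

End Projection.

Lemma Cmod_mul_G_le n k m (P : Mat) s t :
  Cmod (mmul m P (Gmat n k) s t) <= Gentry n k * sumR m (fun p => hind n k p t * Cmod (P s p)).
Proof.
  unfold mmul. eapply Rle_trans; [apply Cmod_sumC_le|]. rewrite sumR_mul_l.
  right. apply sumR_ext; intros. rewrite Cmod_mul, Cmod_Gmat. ring.
Qed.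

Lemma Cmod_G_mul_le n k m (P : Mat) s t :
  Cmod (mmul m (Gmat n k) P s t) <= Gentry n k * sumR m (fun q => hind n k s q * Cmod (P q t)).
Proof.
  unfold mmul. eapply Rle_trans; [apply Cmod_sumC_le|]. rewrite sumR_mul_l.
  right. apply sumR_ext; intros. rewrite Cmod_mul, Cmod_Gmat. ring.
Qed.

(* The three terms bound [P_U G_k], [G_k P_V] and [P_U G_k P_V] entrywise. *)
Definition tangent_weight n r (U V : Blocks) k i s t : R :=
  sumR (hsize n) (fun p => hind n k p t * row_norm r U i s * row_norm r U i p)
  + sumR (hsize n) (fun q => hind n k s q * row_norm r V i q * row_norm r V i t)
  + row_norm r U i s * row_norm r V i t.

Section TangentEntry.
Variables (n r : nat) (U V : Blocks) (i k : nat).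
Local Notation m := (hsize n).
Local Notation PU := (mmul r (U i) (ctrans (U i))).
Local Notation PV := (mmul r (V i) (ctrans (V i))).
Local Notation Gk := (Gmat n k).

Lemma Cmod_PU_G_le s t :
  Cmod (mmul m PU Gk s t)
  <= Gentry n k * sumR m (fun p => hind n k p t * row_norm r U i s * row_norm r U i p).
Proof.
  eapply Rle_trans; [apply Cmod_mul_G_le|].
  apply Rmult_le_compat_l; [apply Gentry_nonneg|]. apply sumR_le; intros p Hp.
  rewrite Rmult_assoc. apply Rmult_le_compat_l; [apply hind_nonneg|apply Cmod_proj_entry_le].
Qed.

Lemma Cmod_G_PV_le s t :
  Cmod (mmul m Gk PV s t)
  <= Gentry n k * sumR m (fun q => hind n k s q * row_norm r V i q * row_norm r V i t).
Proof.
  eapply Rle_trans; [apply Cmod_G_mul_le|].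
  apply Rmult_le_compat_l; [apply Gentry_nonneg|]. apply sumR_le; intros q Hq.
  rewrite Rmult_assoc. apply Rmult_le_compat_l; [apply hind_nonneg|apply Cmod_proj_entry_le].
Qed.

Hypothesis orthoU : forall u u', (u < r)%nat -> (u' < r)%nat ->
  mmul m (ctrans (U i)) (U i) u u' = idmat u u'.
Hypothesis orthoV : forall u u', (u < r)%nat -> (u' < r)%nat ->
  mmul m (ctrans (V i)) (V i) u u' = idmat u u'.

(* Each column of [G_k] has at most one nonzero entry, so the rows of [P_U G_k] are no longer
   than [Gentry n k] times those of [P_U]. *)
Lemma sumR_PU_G_row_sq s :
  sumR m (fun q => Cmod (mmul m PU Gk s q) ^ 2) <= (Gentry n k * row_norm r U i s) ^ 2.
Proof.
  pose proof (Gentry_nonneg n k) as Hg.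
  apply Rle_trans with
    (sumR m (fun q => Gentry n k ^ 2 * sumR m (fun p => hind n k p q * Cmod (PU s p) ^ 2))).
  { apply sumR_le; intros q Hq.
    pose proof (Cmod_mul_G_le n k m PU s q) as Hle.
    apply Rle_trans with ((Gentry n k * sumR m (fun p => hind n k p q * Cmod (PU s p))) ^ 2).
    - apply pow_incr. split; [apply Cmod_nonneg|exact Hle].
    - rewrite Rpow_mult_distr. apply Rmult_le_compat_l; [apply pow2_ge_0|].
      apply sumR_indicator_sq_le; [intros; apply hind_idem|apply sumR_hind_row]. }
  rewrite <- sumR_mul_l, sumR_swap, Rpow_mult_distr, <- (sumR_proj_row_sq m r U i) by auto.
  apply Rmult_le_compat_l; [apply pow2_ge_0|]. apply sumR_le; intros p Hp.
  rewrite (sumR_ext m _ (fun q => Cmod (PU s p) ^ 2 * hind n k p q)) by (intros; ring).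
  rewrite <- sumR_mul_l. rewrite <- (Rmult_1_r (Cmod (PU s p) ^ 2)) at 2.
  apply Rmult_le_compat_l; [apply pow2_ge_0|apply sumR_hind_col].
Qed.

Lemma Cmod_PU_G_PV_le s t :
  Cmod (mmul m (mmul m PU Gk) PV s t) <= Gentry n k * row_norm r U i s * row_norm r V i t.
Proof.
  unfold mmul at 1. eapply Rle_trans; [apply sumC_Cauchy_Schwarz|]. cbv beta.
  rewrite (sumR_proj_col_sq m r V i) by auto. rewrite sqrt_pow2 by apply row_norm_nonneg.
  apply Rmult_le_compat_r; [apply row_norm_nonneg|].
  rewrite <- (sqrt_pow2 (Gentry n k * row_norm r U i s))
    by (apply Rmult_le_pos; [apply Gentry_nonneg|apply row_norm_nonneg]).
  apply sqrt_le_1_alt, sumR_PU_G_row_sq.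
Qed.

Lemma Cmod_PT_G_le s t :
  Cmod (PT m r U V (fun _ => Gk) i s t) <= Gentry n k * tangent_weight n r U V k i s t.
Proof.
  unfold PT, tangent_weight. cbv zeta. unfold msub, madd.
  eapply Rle_trans; [apply Cmod_sub_le|].
  pose proof (Cmod_triangle (mmul m PU Gk s t) (mmul m Gk PV s t)).
  pose proof (Cmod_PU_G_le s t). pose proof (Cmod_G_PV_le s t). pose proof (Cmod_PU_G_PV_le s t).
  nra.
Qed.

End TangentEntry.

(** * Averaged coefficient bound *)

Lemma avg_mul_le d (a b : nat -> R) M : (1 <= d)%nat ->
  / INR d * sumR d (fun i => a i ^ 2) <= M -> / INR d * sumR d (fun i => b i ^ 2) <= M ->
  / INR d * sumR d (fun i => a i * b i) <= M.
Proof.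
  intros Hd Ha Hb. assert (HD : 0 < INR d) by (apply lt_0_INR; lia).
  assert (Sa : 0 <= sumR d (fun i => a i ^ 2)) by (apply sumR_nonneg; intros; apply pow2_ge_0).
  assert (Sb : 0 <= sumR d (fun i => b i ^ 2)) by (apply sumR_nonneg; intros; apply pow2_ge_0).
  apply (Rmult_le_compat_l (INR d)) in Ha, Hb; try lra.
  rewrite <- Rmult_assoc, Rinv_r, Rmult_1_l in Ha, Hb by lra.
  assert (HM : 0 <= INR d * M) by lra.
  apply (Rmult_le_reg_l (INR d)); auto. rewrite <- Rmult_assoc, Rinv_r, Rmult_1_l by lra.
  eapply Rle_trans; [apply sumR_Cauchy_Schwarz|].
  rewrite <- sqrt_mult, <- (sqrt_pow2 (INR d * M)) by auto. apply sqrt_le_1_alt.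
  replace ((INR d * M) ^ 2) with ((INR d * M) * (INR d * M)) by ring.
  apply Rmult_le_compat; auto.
Qed.

Lemma avg_weighted_le d m (w : nat -> R) (x : nat -> nat -> R) M :
  (forall p, (p < m)%nat -> 0 <= w p) -> sumR m w <= 1 -> 0 <= M ->
  (forall p, (p < m)%nat -> / INR d * sumR d (fun i => x i p) <= M) ->
  / INR d * sumR m (fun p => sumR d (fun i => w p * x i p)) <= M.
Proof.
  intros Hw Hs HM Hx. rewrite sumR_mul_l.
  apply Rle_trans with (sumR m (fun p => M * w p)).
  - apply sumR_le; intros p Hp. rewrite <- sumR_mul_l.
    replace (/ INR d * (w p * sumR d (fun i => x i p)))
      with (w p * (/ INR d * sumR d (fun i => x i p))) by ring.
    rewrite (Rmult_comm M). apply Rmult_le_compat_l; auto.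
  - rewrite <- sumR_mul_l. nra.
Qed.

Lemma row_incoherent_nonneg d n r U M s :
  (1 <= d)%nat -> row_incoherent d n r U M -> (s < hsize n)%nat -> 0 <= M.
Proof.
  intros Hd H Hs. eapply Rle_trans; [|apply (H s Hs)]. apply Rmult_le_pos.
  - apply Rlt_le, Rinv_0_lt_compat, lt_0_INR; lia.
  - apply sumR_nonneg; intros; apply sumR_nonneg; intros; apply pow2_ge_0.
Qed.

Lemma avg_row_norm_mul_le d n r U W M s t : (1 <= d)%nat ->
  row_incoherent d n r U M -> row_incoherent d n r W M ->
  (s < hsize n)%nat -> (t < hsize n)%nat ->
  / INR d * sumR d (fun i => row_norm r U i s * row_norm r W i t) <= M.
Proof.
  intros Hd HU HW Hs Ht. apply avg_mul_le; auto.
  - rewrite (sumR_ext d _ _ (fun i _ => row_norm_sq r U i s)). apply HU; auto.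
  - rewrite (sumR_ext d _ _ (fun i _ => row_norm_sq r W i t)). apply HW; auto.
Qed.

Lemma avg_tangent_weight_le d n r U V M k s t : (1 <= d)%nat ->
  row_incoherent d n r U M -> row_incoherent d n r V M ->
  (s < hsize n)%nat -> (t < hsize n)%nat ->
  / INR d * sumR d (fun i => tangent_weight n r U V k i s t) <= 3 * M.
Proof.
  intros Hd HU HV Hs Ht. pose proof (row_incoherent_nonneg d n r U M s Hd HU Hs) as HM.
  unfold tangent_weight. rewrite !sumR_add, !(sumR_swap d (hsize n)), !Rmult_plus_distr_l.
  assert (/ INR d * sumR (hsize n) (fun p => sumR d (fun i =>
            hind n k p t * row_norm r U i s * row_norm r U i p)) <= M).
  { rewrite (sumR_ext (hsize n) _ (fun p => sumR d (fun i =>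
      hind n k p t * (row_norm r U i s * row_norm r U i p))))
      by (intros; apply sumR_ext; intros; ring).
    apply (avg_weighted_le d (hsize n) (fun p => hind n k p t)); auto.
    - intros; apply hind_nonneg.
    - apply (sumR_hind_row n k t).
    - intros; apply (avg_row_norm_mul_le d n); auto. }
  assert (/ INR d * sumR (hsize n) (fun q => sumR d (fun i =>
            hind n k s q * row_norm r V i q * row_norm r V i t)) <= M).
  { rewrite (sumR_ext (hsize n) _ (fun q => sumR d (fun i =>
      hind n k s q * (row_norm r V i q * row_norm r V i t))))
      by (intros; apply sumR_ext; intros; ring).
    apply (avg_weighted_le d (hsize n) (fun q => hind n k s q)); auto.
    - intros; apply hind_nonneg.
    - apply (sumR_hind_col n k s).
    - intros; apply (avg_row_norm_mul_le d n); auto. }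
  pose proof (avg_row_norm_mul_le d n r U V M s t Hd HU HV Hs Ht). lra.
Qed.

Lemma Cmod_binner_bcmul_le d n f g A B :
  Cmod (binner d n (bcmul f A) (bcmul g B)) <=
  sumR d (fun i => sumR (hsize n) (fun s => sumR (hsize n) (fun t =>
     Cmod (f i) * Cmod (g i) * (Cmod (A i s t) * Cmod (B i s t))))).
Proof.
  unfold binner, bcmul, mcmul.
  eapply Rle_trans; [apply Cmod_sumC_le|]. apply sumR_le; intros i Hi.
  eapply Rle_trans; [apply Cmod_sumC_le|]. apply sumR_le; intros s Hs.
  eapply Rle_trans; [apply Cmod_sumC_le|]. apply sumR_le; intros t Ht.
  rewrite Cmod_mul, Cmod_conj, !Cmod_mul. right; ring.
Qed.

Section CoefficientBound.
Variables (d n r : nat) (U V : Blocks) (M : R).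
Hypotheses (Hd : (1 <= d)%nat)
  (orthoU : orthonormal_blocks d n r U) (orthoV : orthonormal_blocks d n r V)
  (incohU : row_incoherent d n r U M) (incohV : row_incoherent d n r V M).

(* The DFT phases have modulus [/ sqrt d] and drop out, leaving an average over the blocks. *)
Lemma Cmod_tangent_coef_le_avg l a j k :
  (l < d)%nat -> (a < n)%nat -> (j < d)%nat -> (k < n)%nat ->
  Cmod (tangent_coef d n r U V (GhatE d n l a) (Eunit j k))
  <= sumR (hsize n) (fun s => sumR (hsize n) (fun t =>
       hind n a s t * Gentry n a * Gentry n k
       * (/ INR d * sumR d (fun i => tangent_weight n r U V k i s t)))).
Proof.
  intros Hl Ha Hj Hk. assert (HD : 0 < INR d) by (apply lt_0_INR; lia).
  unfold tangent_coef. change (Ghat d n (Eunit j k)) with (GhatE d n j k).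
  rewrite (GhatE_eq d n j k), (GhatE_eq d n l a), PT_bcmul by auto.
  eapply Rle_trans; [apply Cmod_binner_bcmul_le|].
  rewrite (sumR_swap d (hsize n)). apply sumR_le; intros s Hs.
  rewrite (sumR_swap d (hsize n)). apply sumR_le; intros t Ht.
  rewrite !sumR_mul_l. apply sumR_le; intros i Hi.
  rewrite !Cmod_Fdft, Cmod_Gmat by auto.
  replace (/ sqrt (INR d) * / sqrt (INR d)) with (/ INR d)
    by (rewrite <- Rinv_mult, sqrt_sqrt; lra).
  pose proof (Cmod_PT_G_le n r U V i k (fun u u' => orthoU i u u' Hi)
                (fun u u' => orthoV i u u' Hi) s t).
  pose proof (hind_nonneg n a s t). pose proof (Gentry_nonneg n a). pose proof (Gentry_nonneg n k).
  assert (0 <= / INR d) by (apply Rlt_le, Rinv_0_lt_compat; auto).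
  assert (0 <= hind n a s t * Gentry n a) by (apply Rmult_le_pos; auto).
  replace (hind n a s t * Gentry n a * Gentry n k * (/ INR d * tangent_weight n r U V k i s t))
    with (/ INR d * ((Gentry n k * tangent_weight n r U V k i s t) * (hind n a s t * Gentry n a)))
    by ring.
  apply Rmult_le_compat_l; auto. apply Rmult_le_compat_r; auto.
Qed.

Lemma Cmod_tangent_coef_le l a j k :
  (l < d)%nat -> (a < n)%nat -> (j < d)%nat -> (k < n)%nat ->
  Cmod (tangent_coef d n r U V (GhatE d n l a) (Eunit j k))
  <= 3 * M * Gentry n k * sqrt (hw n a).
Proof.
  intros Hl Ha Hj Hk.
  eapply Rle_trans; [apply Cmod_tangent_coef_le_avg; auto|].
  apply Rle_trans with (sumR (hsize n) (fun s => sumR (hsize n) (fun t =>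
      3 * M * Gentry n a * Gentry n k * hind n a s t))).
  - apply sumR_le; intros s Hs. apply sumR_le; intros t Ht.
    pose proof (avg_tangent_weight_le d n r U V M k s t Hd incohU incohV Hs Ht).
    pose proof (hind_nonneg n a s t). pose proof (Gentry_nonneg n a). pose proof (Gentry_nonneg n k).
    replace (3 * M * Gentry n a * Gentry n k * hind n a s t)
      with (hind n a s t * Gentry n a * Gentry n k * (3 * M)) by ring.
    apply Rmult_le_compat_l; auto. repeat apply Rmult_le_pos; auto.
  - right. rewrite (sumR_ext (hsize n) _
      (fun s => 3 * M * Gentry n a * Gentry n k * sumR (hsize n) (fun t => hind n a s t)))
      by (intros; rewrite sumR_mul_l; reflexivity).
    rewrite <- sumR_mul_l, sumR_hind, <- hw_Gentry. ring.
Qed.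

End CoefficientBound.

(** * Tail bound for a single entry *)

Lemma divmod_pair n j k : (k < n)%nat -> ((j * n + k) / n = j /\ (j * n + k) mod n = k)%nat.
Proof.
  intros Hk. split.
  - rewrite Nat.div_add_l, Nat.div_small by lia. lia.
  - rewrite Nat.add_comm, Nat.Div0.mod_add. apply Nat.mod_small; lia.
Qed.

Lemma inv_sqrt_pos x : 0 < x -> 0 < / sqrt x.
Proof. intros. apply Rinv_0_lt_compat, sqrt_lt_R0; auto. Qed.

Lemma Cmod_gt_indicator_le (w : C) T :
  (if Rle_dec (Cmod w) T then 0 else 1)
  <= (if Rle_dec (Cre w) (T / 2) then 0 else 1) + (if Rle_dec (- Cre w) (T / 2) then 0 else 1)
     + (if Rle_dec (Cim w) (T / 2) then 0 else 1) + (if Rle_dec (- Cim w) (T / 2) then 0 else 1).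
Proof.
  pose proof (Cmod_le_Rabs_re_im w).
  destruct (Rle_dec (Cmod w) T); [repeat destruct (Rle_dec _ _); lra|].
  destruct (Rle_dec (Cre w) (T / 2)), (Rle_dec (- Cre w) (T / 2)),
    (Rle_dec (Cim w) (T / 2)), (Rle_dec (- Cim w) (T / 2)); try lra.
  assert (Rabs (Cre w) <= T / 2) by (apply Rabs_le; lra).
  assert (Rabs (Cim w) <= T / 2) by (apply Rabs_le; lra). lra.
Qed.

Lemma bernstein_level_ok M GF GI L p : 0 <= M -> 0 <= GF -> 0 <= GI -> 0 <= L -> 0 < p ->
  8 * (3 * M * GI / p) * L <= 24 * M * (sqrt (L / p) * GF + L / p * GI) /\
  16 * L * (9 * M ^ 2 * GF ^ 2 / p) <= (24 * M * (sqrt (L / p) * GF + L / p * GI)) ^ 2.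
Proof.
  intros HM HGF HGI HL Hp.
  assert (HLp : 0 <= L / p) by (unfold Rdiv; apply Rmult_le_pos; [lra|left; apply Rinv_0_lt_compat; lra]).
  assert (Hs : sqrt (L / p) ^ 2 = L / p) by (apply pow2_sqrt; auto).
  pose proof (sqrt_pos (L / p)).
  assert (0 <= sqrt (L / p) * GF) by nra. assert (0 <= L / p * GI) by nra.
  split.
  - replace (8 * (3 * M * GI / p) * L) with (24 * M * (L / p * GI)) by (field; lra).
    assert (0 <= M * (sqrt (L / p) * GF)) by (apply Rmult_le_pos; lra). nra.
  - replace (16 * L * (9 * M ^ 2 * GF ^ 2 / p)) with (144 * M ^ 2 * (sqrt (L / p) * GF) ^ 2)
      by (rewrite Rpow_mult_distr, Hs; field; lra).
    assert (0 <= M * (sqrt (L / p) * GF) * (M * (L / p * GI))) by (apply Rmult_le_pos; apply Rmult_le_pos; lra).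
    nra.
Qed.

Lemma bernstein_level_nonneg c M L p G1 G2 :
  0 <= c -> 0 <= M -> 0 <= L -> 0 < p -> 0 <= G1 -> 0 <= G2 ->
  0 <= c * M * (sqrt (L / p) * G1 + L / p * G2).
Proof.
  intros Hc HM HL Hp HG1 HG2.
  assert (0 <= L / p) by (unfold Rdiv; apply Rmult_le_pos; [lra|left; apply Rinv_0_lt_compat; lra]).
  pose proof (sqrt_pos (L / p)).
  apply Rmult_le_pos; [apply Rmult_le_pos; lra|].
  apply Rplus_le_le_0_compat; apply Rmult_le_pos; lra.
Qed.

Lemma ln_INR_nonneg N : (1 <= N)%nat -> 0 <= ln (INR N).
Proof.
  intros HN. rewrite <- ln_1. assert (1 <= INR N) by (apply (le_INR 1); lia).
  destruct (Req_dec (INR N) 1) as [->|]; [lra|left; apply ln_increasing; lra].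
Qed.

(* The normalised entries [|<Ghat^* Z, e_j e_k^T>| / sqrt (d w_k)] whose maximum and
   l2-norm are [normGinf] and [normGF]. *)
Definition Zweight d n (Z : Blocks) j k : R := / sqrt (INR d * hw n k) * Cmod (Gstar d n Z j k).

Lemma dhw_pos d n k : (1 <= d)%nat -> Nat.Odd n -> (k < n)%nat -> 0 < INR d * hw n k.
Proof.
  intros Hd Hodd Hk. pose proof (hw_ge_1 n k Hodd Hk).
  assert (0 < INR d) by (apply lt_0_INR; lia). nra.
Qed.

Lemma Zweight_le_normGinf d n Z j k :
  (j < d)%nat -> (k < n)%nat -> Zweight d n Z j k <= normGinf d n Z.
Proof.
  intros Hj Hk. unfold normGinf.
  eapply Rle_trans; [|apply (maxR_ge d _ j Hj)]. cbv beta.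
  eapply Rle_trans; [|apply (maxR_ge n _ k Hk)]. apply Rle_refl.
Qed.

Lemma sumR_Zweight_sq d n Z : (1 <= d)%nat -> Nat.Odd n ->
  sumR d (fun j => sumR n (fun k => Zweight d n Z j k ^ 2)) = normGF d n Z ^ 2.
Proof.
  intros Hd Hodd.
  assert (Hsq : forall k, (k < n)%nat -> (/ sqrt (INR d * hw n k)) ^ 2 = / (INR d * hw n k)).
  { intros k Hk. pose proof (dhw_pos d n k Hd Hodd Hk). rewrite pow_inv, pow2_sqrt; lra. }
  unfold normGF. rewrite pow2_sqrt.
  - apply sumR_ext; intros j Hj. apply sumR_ext; intros k Hk.
    unfold Zweight. rewrite Rpow_mult_distr, Hsq; auto.
  - apply sumR_nonneg; intros j Hj; apply sumR_nonneg; intros k Hk.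
    apply Rmult_le_pos; [|apply pow2_ge_0]. left. apply Rinv_0_lt_compat, dhw_pos; auto.
Qed.

Section Entry.
Variables (d n r : nat) (U V Z : Blocks) (M p : R) (l a : nat).
Hypotheses (Hd : (1 <= d)%nat) (Hn : (1 <= n)%nat) (Hodd : Nat.Odd n)
  (Hl : (l < d)%nat) (Ha : (a < n)%nat)
  (orthoU : orthonormal_blocks d n r U) (orthoV : orthonormal_blocks d n r V)
  (incohU : row_incoherent d n r U M) (incohV : row_incoherent d n r V M) (Hp : 0 < p <= 1).

Let norm_a := / sqrt (INR d * hw n a).

(* Summand [(j,k)] of the normalised [(l,a)] entry, before the Bernoulli factor. *)
Definition entry_summand j k : C :=
  Cmul (CR norm_a) (Cmul (Gstar d n Z j k) (tangent_coef d n r U V (GhatE d n l a) (Eunit j k))).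

Definition entry_sum om : C :=
  sumC d (fun j => sumC n (fun k => Cmul (CR (sample_bit n om j k / p - 1)) (entry_summand j k))).

Lemma M_nonneg : 0 <= M.
Proof. exact (row_incoherent_nonneg d n r U M 0 Hd incohU (hsize_pos n Hn)). Qed.

Lemma Cmod_entry_summand_le j k : (j < d)%nat -> (k < n)%nat ->
  Cmod (entry_summand j k) <= 3 * M * Zweight d n Z j k.
Proof.
  intros Hj Hk. unfold entry_summand, Zweight, norm_a. rewrite !Cmod_mul, Cmod_CR.
  pose proof (dhw_pos d n a Hd Hodd Ha). pose proof (hw_ge_1 n a Hodd Ha). pose proof (hw_ge_1 n k Hodd Hk).
  rewrite Rabs_right by (apply Rle_ge, Rlt_le, inv_sqrt_pos; auto).
  pose proof (Cmod_tangent_coef_le d n r U V M Hd orthoU orthoV incohU incohV l a j k Hl Ha Hj Hk).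
  pose proof (Cmod_nonneg (Gstar d n Z j k)). pose proof (inv_sqrt_pos _ H).
  apply Rle_trans with (/ sqrt (INR d * hw n a)
    * (Cmod (Gstar d n Z j k) * (3 * M * Gentry n k * sqrt (hw n a)))).
  { apply Rmult_le_compat_l; [lra|]. apply Rmult_le_compat_l; auto. }
  right. unfold Gentry. pose proof (pos_INR d). pose proof (hw_nonneg n a). pose proof (hw_nonneg n k).
  rewrite !sqrt_mult by lra.
  assert (0 < sqrt (INR d)) by (apply sqrt_lt_R0, lt_0_INR; lia).
  assert (0 < sqrt (hw n a)) by (apply sqrt_lt_R0; lra).
  assert (0 < sqrt (hw n k)) by (apply sqrt_lt_R0; lra).
  field. lra.
Qed.

Lemma normalised_entry_eq om :
  norm_a * Cmod (binner d n (lemma_op d n r U V p om Z) (GhatE d n l a)) = Cmod (entry_sum om).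
Proof.
  assert (Hna : 0 <= norm_a) by (apply Rlt_le, inv_sqrt_pos, dhw_pos; auto).
  rewrite <- (Rabs_right norm_a), <- Cmod_CR, <- Cmod_mul by lra. f_equal.
  rewrite binner_lemma_op_expand by lra. unfold entry_sum, entry_summand.
  rewrite sumC_mul_l. apply sumC_ext; intros j Hj.
  rewrite sumC_mul_l. apply sumC_ext; intros k Hk. ring.
Qed.

Definition entry_re m := Cre (entry_summand (m / n) (m mod n)).
Definition entry_im m := Cim (entry_summand (m / n) (m mod n)).

Lemma Cre_entry_sum om : Cre (entry_sum om) = bern_sum (d * n) p entry_re om.
Proof.
  unfold entry_sum, bern_sum, entry_re. rewrite <- sumR_pair_flatten, Cre_sumC.
  apply sumR_ext; intros j Hj. rewrite Cre_sumC. apply sumR_ext; intros k Hk.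
  destruct (divmod_pair n j k Hk) as [-> ->]. simpl. unfold sample_bit. ring.
Qed.

Lemma Cim_entry_sum om : Cim (entry_sum om) = bern_sum (d * n) p entry_im om.
Proof.
  unfold entry_sum, bern_sum, entry_im. rewrite <- sumR_pair_flatten, Cim_sumC.
  apply sumR_ext; intros j Hj. rewrite Cim_sumC. apply sumR_ext; intros k Hk.
  destruct (divmod_pair n j k Hk) as [-> ->]. simpl. unfold sample_bit. ring.
Qed.

Lemma entry_component_tail (z : nat -> R) L tau :
  (forall m, Rabs (z m) <= Cmod (entry_summand (m / n) (m mod n))) ->
  0 <= L -> 0 <= tau ->
  8 * (3 * M * normGinf d n Z / p) * L <= tau ->
  16 * L * (9 * M ^ 2 * normGF d n Z ^ 2 / p) <= tau ^ 2 ->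
  bern_expect (d * n) p (fun om => if Rle_dec (bern_sum (d * n) p z om) tau then 0 else 1)
  <= exp (- 2 * L).
Proof.
  intros Hz HL Htau Hlin Hquad. pose proof M_nonneg as HM.
  assert (Hzjk : forall j k, (j < d)%nat -> (k < n)%nat ->
            Rabs (z (j * n + k)%nat) <= 3 * M * Zweight d n Z j k).
  { intros j k Hj Hk. eapply Rle_trans; [apply Hz|].
    destruct (divmod_pair n j k Hk) as [-> ->]. apply Cmod_entry_summand_le; auto. }
  apply (bern_sum_bernstein (d * n) p z (3 * M * normGinf d n Z) (9 * M ^ 2 * normGF d n Z ^ 2));
    auto.
  - apply Rmult_le_pos; [lra|apply maxR_nonneg].
  - intros m Hm.
    assert (Hj : (m / n < d)%nat) by (apply Nat.Div0.div_lt_upper_bound; lia).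
    assert (Hk : (m mod n < n)%nat) by (apply Nat.mod_upper_bound; lia).
    rewrite (Nat.div_mod_eq m n), Nat.mul_comm. eapply Rle_trans; [apply Hzjk; auto|].
    apply Rmult_le_compat_l; [lra|apply Zweight_le_normGinf; auto].
  - rewrite <- (sumR_Zweight_sq d n Z Hd Hodd), <- sumR_pair_flatten, sumR_mul_l.
    apply sumR_le; intros j Hj. rewrite sumR_mul_l. apply sumR_le; intros k Hk.
    pose proof (Hzjk j k Hj Hk). pose proof (Rabs_pos (z (j * n + k)%nat)).
    rewrite <- pow2_abs. replace (9 * M ^ 2 * Zweight d n Z j k ^ 2) with ((3 * M * Zweight d n Z j k) ^ 2) by ring.
    apply pow_incr. lra.
Qed.

Lemma entry_tail :
  bern_expect (d * n) p (fun om =>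
    if Rle_dec (norm_a * Cmod (binner d n (lemma_op d n r U V p om Z) (GhatE d n l a)))
         (48 * M * (sqrt (ln (INR (d * n)) / p) * normGF d n Z
                    + ln (INR (d * n)) / p * normGinf d n Z))
    then 0 else 1)
  <= 4 * exp (- 2 * ln (INR (d * n))).
Proof.
  set (L := ln (INR (d * n))). set (GF := normGF d n Z). set (GI := normGinf d n Z).
  set (tau := 24 * M * (sqrt (L / p) * GF + L / p * GI)).
  pose proof M_nonneg as HM.
  assert (HL : 0 <= L) by (apply ln_INR_nonneg; nia).
  assert (HGF : 0 <= GF) by apply sqrt_pos. assert (HGI : 0 <= GI) by apply maxR_nonneg.
  destruct (bernstein_level_ok M GF GI L p) as [Hlin Hquad]; try lra.
  assert (Htau : 0 <= tau) by (apply bernstein_level_nonneg; lra).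
  set (bad := fun z om => if Rle_dec (bern_sum (d * n) p z om) tau then 0 else 1).
  assert (Hbad : forall z, (forall m, Rabs (z m) <= Cmod (entry_summand (m / n) (m mod n))) ->
                 bern_expect (d * n) p (bad z) <= exp (- 2 * L))
    by (intros z Hz; apply entry_component_tail; auto).
  apply Rle_trans with (bern_expect (d * n) p (fun om =>
    bad entry_re om + bad (fun m => - entry_re m) om + bad entry_im om + bad (fun m => - entry_im m) om)).
  - apply bern_expect_le; [lra|]. intros om. rewrite normalised_entry_eq.
    replace (48 * M * (sqrt (L / p) * GF + L / p * GI)) with (2 * tau) by (unfold tau; ring).
    eapply Rle_trans; [apply Cmod_gt_indicator_le|].
    unfold bad. rewrite !bern_sum_opp, <- Cre_entry_sum, <- Cim_entry_sum.
    replace (2 * tau / 2) with tau by field. lra.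
  - rewrite !bern_expect_add.
    pose proof (Hbad entry_re (fun m => Rabs_Cre_le _)).
    pose proof (Hbad (fun m => - entry_re m) ltac:(intros; cbv beta; rewrite Rabs_Ropp; apply Rabs_Cre_le)).
    pose proof (Hbad entry_im (fun m => Rabs_Cim_le _)).
    pose proof (Hbad (fun m => - entry_im m) ltac:(intros; cbv beta; rewrite Rabs_Ropp; apply Rabs_Cim_le)).
    lra.
Qed.

End Entry.

Lemma bern_expect_maxR_union_bound N p d n (f : nat -> nat -> list bool -> R) T :
  0 <= p <= 1 -> 0 <= T ->
  1 - sumR d (fun l => sumR n (fun a =>
        bern_expect N p (fun om => if Rle_dec (f l a om) T then 0 else 1)))
  <= bern_expect N p (fun om =>
       if Rle_dec (maxR d (fun l => maxR n (fun a => f l a om))) T then 1 else 0).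
Proof.
  intros Hp HT.
  set (bad := fun l a om => if Rle_dec (f l a om) T then 0 else 1).
  assert (Hbad : forall l a om, 0 <= bad l a om <= 1)
    by (intros; unfold bad; destruct (Rle_dec _ _); lra).
  replace (1 - _) with
    (bern_expect N p (fun om => 1 * 1 + (-1) * sumR d (fun l => sumR n (fun a => bad l a om)))).
  2:{ rewrite bern_expect_lin, bern_expect_const, bern_expect_sumR.
      rewrite (sumR_ext d _ (fun l => sumR n (fun a => bern_expect N p (bad l a))))
        by (intros; apply bern_expect_sumR).
      unfold bad. ring. }
  apply bern_expect_le; auto. intros om.
  assert (Hsum : 0 <= sumR d (fun l => sumR n (fun a => bad l a om)))
    by (apply sumR_nonneg; intros; apply sumR_nonneg; intros; apply Hbad).
  destruct (Rle_dec _ T) as [|Hgt]; [lra|].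
  enough (1 <= sumR d (fun l => sumR n (fun a => bad l a om))) by lra.
  destruct (Rlt_le_dec (sumR d (fun l => sumR n (fun a => bad l a om))) 1) as [Hlt|]; [|lra].
  exfalso. apply Hgt. apply maxR_le; auto. intros l Hl. apply maxR_le; auto. intros a Ha.
  assert (Hla : bad l a om <= sumR d (fun l => sumR n (fun a => bad l a om))).
  { eapply Rle_trans; [|apply (sumR_term_le d _ l); auto].
    - apply (sumR_term_le n (fun a => bad l a om) a); auto. intros; apply Hbad.
    - intros; apply sumR_nonneg; intros; apply Hbad. }
  destruct (Rle_dec (f l a om) T) as [|Hfa]; [assumption|exfalso].
  assert (bad l a om = 1) by (unfold bad; destruct (Rle_dec _ _); [contradiction|reflexivity]).
  lra.
Qed.

Lemma compact_svd_orthonormal d n r Znat U Sig V :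
  compact_svd d n r Znat U Sig V -> orthonormal_blocks d n r U /\ orthonormal_blocks d n r V.
Proof.
  intros Hsvd. split; intros i u u' Hi; destruct (Hsvd i Hi) as (_ & HU & HV & _); auto.
Qed.

Lemma mul_exp_neg2_ln x : 0 < x -> x * exp (- 2 * ln x) = Rpower x (- 1).
Proof.
  intros Hx. unfold Rpower. replace (- 1 * ln x) with (ln x + - 2 * ln x) by ring.
  rewrite exp_plus, exp_ln; auto.
Qed.

Theorem lemma4p5 :
  exists Cc c1 c2 : R, 0 < Cc /\ 0 < c1 /\ 0 < c2 /\
  forall (d n r : nat) (mu0 p : R) (Znat U Sig V Z : Blocks),
    (1 <= d)%nat -> (1 <= n)%nat -> Nat.Odd n ->
    compact_svd d n r Znat U Sig V ->
    avg_incoherent d n r mu0 U V ->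
    0 < p <= 1 ->
    bern_expect (d * n) p
      (fun om =>
         if Rle_dec
              (normGinf d n (lemma_op d n r U V p om Z))
              (Cc * (mu0 * INR r / INR n) *
                 (sqrt (ln (INR (d * n)) / p) * normGF d n Z
                  + ln (INR (d * n)) / p * normGinf d n Z))
         then 1 else 0)
    >= 1 - c1 * Rpower (INR (d * n)) (- c2).
Proof.
  exists 48, 4, 1. split; [lra|]. split; [lra|]. split; [lra|].
  intros d n r mu0 p Znat U Sig V Z Hd Hn Hodd Hsvd [incohU incohV] Hp.
  set (M := mu0 * INR r / INR n) in *.
  destruct (compact_svd_orthonormal d n r Znat U Sig V Hsvd) as [orthoU orthoV].
  assert (HM : 0 <= M) by exact (row_incoherent_nonneg d n r U M 0 Hd incohU (hsize_pos n Hn)).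
  apply Rle_ge. eapply Rle_trans; [|apply bern_expect_maxR_union_bound].
  - apply Rplus_le_compat_l, Ropp_le_contravar.
    rewrite <- mul_exp_neg2_ln by (apply lt_0_INR; nia).
    apply Rle_trans with (sumR d (fun _ => sumR n (fun _ => 4 * exp (- 2 * ln (INR (d * n)))))).
    + apply sumR_le; intros l Hl. apply sumR_le; intros a Ha.
      exact (entry_tail d n r U V Z M p l a Hd Hn Hodd Hl Ha orthoU orthoV incohU incohV Hp).
    + rewrite !sumR_const, mult_INR. right; ring.
  - lra.
  - apply bernstein_level_nonneg; try lra.
    + apply ln_INR_nonneg. nia.
    + apply sqrt_pos.
    + apply maxR_nonneg.
Qed.
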